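(* For any $n$ and $f$ with $f<\frac{n}{2}$, the reliable broadcast algorithm described in the context is an $f$-resilient Byzantine linearizable implementation of a reliable broadcast object for $n$ processes, $f$ of which may be Byzantine, provided that (A1) every correct process invokes methods of the reliable broadcast API infinitely often, and (A2) no correct process invokes broadcast$(ts,val)$ twice with the same $ts$.
   Context: Model: processes $\Pi=\{1,\dots,n\}$, asynchronous, communicating only through reliable single-writer multi-reader (SWMR) registers. An adversary may adaptively corrupt up to $f$ processes; corrupted (Byzantine) processes deviate arbitrarily (e.g. write arbitrary values to their own registers). Correct processes follow the algorithm and take infinitely many steps. PKI: $\langle x\rangle_p$ denotes $x$ signed by $p$; signatures are unforgeable. Reliable broadcast object (sequential specification): operations broadcast$(ts,v)$ and deliver$(j,ts)$; deliver$(j,ts)$ returns the value $v$ of the first broadcast$(ts,v)$ invoked by process $j$ before it, or $\bot$ if none. Correctness notions: a history $H$ is linearizable if there is a sequential history, obtained by removing some pending operations and completing others, preserving the real-time order of operations and satisfying the sequential specification. $H|_{correct}$ is the subsequence of events of correct processes. $H$ is Byzantine linearizable if some linearizable $H'$ has $H'|_{correct}=H|_{correct}$; an implementation is Byzantine linearizable if all its execution histories are. It is $f$-resilient if, whenever at most $f$ processes fail, every correct process eventually returns from each operation it invokes. Algorithm (code for process $i$): $i$ owns SWMR registers $send_i$, $echo_i$, $ready_i$, $deliver_i$ (the last three hold sets, initially empty). conflicting-echo$(\langle ts,v\rangle_j)$: reads all echo registers; returns true iff there exist $w\neq v$ and $k\in\Pi$ with $\langle ts,w\rangle_j\in echo_k$.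 broadcast$(ts,val)$: write $send_i\gets\langle ts,val\rangle_i$; then repeatedly call deliver$(i,ts)$ until it returns a value $\neq\bot$, and return. deliver$(j,ts)$: call refresh(); if there exist $k\in\Pi$ and $v$ such that $\langle\langle ts,v\rangle_j,\sigma\rangle\in deliver_k$ where $\sigma$ is a set of $f+1$ signatures of distinct processes on $\langle ready,\langle ts,v\rangle_j\rangle$, then add $\langle\langle ts,v\rangle_j,\sigma\rangle$ to $deliver_i$ and return $v$; otherwise return $\bot$. refresh(): for each $j\in[n]$: read $m\gets send_j$; if $m$ is not of the form $\langle ts,val\rangle_j$, skip to next $j$; add $m$ (signed by $i$) to $echo_i$; if not conflicting-echo$(m)$, add $\langle ready,m\rangle_i$ to $ready_i$; if there is $S\subseteq\Pi$ with $|S|\geq f+1$ such that $\langle ready,m\rangle_l\in ready_l$ for all $l\in S$, and not conflicting-echo$(m)$, then add $\langle m,\{\langle ready,m\rangle_l: l\in S\}\rangle$ to $deliver_i$. *)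

From HB Require Import structures.
From mathcomp Require Import all_boot.
From Stdlib Require List.
Set Implicit Arguments. Unset Strict Implicit. Unset Printing Implicit Defensive.

Section Model.
Variables (n f : nat) (V : eqType).
Local Notation proc := 'I_n.

(* Symbolic messages (PKI): MSig p m = <m>_p, MPair ts v = <ts,v>,     *)
(* MReady m = <ready,m>, MDel m sigma = <m,sigma>.                     *)
Inductive msg : Type :=
| MPair : nat -> V -> msg
| MSig : proc -> msg -> msg
| MReady : msg -> msg
| MDel : msg -> seq msg -> msg.

Fixpoint msg_eqb (a b : msg) {struct a} : bool :=
  match a, b with
  | MPair t v, MPair t' v' => (t == t') && (v == v')
  | MSig p m, MSig p' m' => (p == p') && msg_eqb m m'
  | MReady m, MReady m' => msg_eqb m m'
  | MDel m s, MDel m' s' =>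
      msg_eqb m m' &&
      (fix eqs (s1 s2 : seq msg) {struct s1} : bool :=
         match s1, s2 with
         | [::], [::] => true
         | x :: s1', y :: s2' => msg_eqb x y && eqs s1' s2'
         | _, _ => false
         end) s s'
  | _, _ => false
  end.

Inductive subterm : msg -> msg -> Prop :=
| st_refl m : subterm m m
| st_sig m' p m : subterm m' m -> subterm m' (MSig p m)
| st_ready m' m : subterm m' m -> subterm m' (MReady m)
| st_del1 m' m s : subterm m' m -> subterm m' (MDel m s)
| st_del2 m' m s x : List.In x s -> subterm m' x -> subterm m' (MDel m s).

(* Registers: every process owns send/echo/ready/deliver; a register   *)
(* holds a finite list of messages (send_i holds [:: m] or garbage).   *)
Inductive rkind := RSend | REcho | RReady | RDeliver.

Definition rk_eqb (a b : rkind) : bool :=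
  match a, b with
  | RSend, RSend | REcho, REcho | RReady, RReady | RDeliver, RDeliver => true
  | _, _ => false
  end.

Definition memory := proc -> rkind -> seq msg.

(* Programs of a correct process: one shared-register access per step. *)
Inductive prog : Type :=
| PRet : option V -> prog
| PRead : proc -> rkind -> (seq msg -> prog) -> prog
| PWrite : rkind -> (seq msg -> seq msg) -> prog -> prog.
(* PWrite k g p : write g(old content) into the own register of kind k
   (the single writer knows the content of its own register). *)

Definition add (x : msg) (s : seq msg) : seq msg :=
  if has (msg_eqb x) s then s else rcons s x.

Fixpoint read_all (k : rkind) (ps : seq proc) (acc : proc -> seq msg)
    (cont : (proc -> seq msg) -> prog) : prog :=
  match ps with
  | [::] => cont acc
  | p :: ps' =>
      PRead p k (fun x => read_all k ps' (fun q => if q == p then x else acc q) cont)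
  end.

Definition read_all_regs (k : rkind) (cont : (proc -> seq msg) -> prog) : prog :=
  read_all k (enum proc) (fun _ => [::]) cont.

Definition send_content (j : proc) (x : seq msg) : option (nat * V) :=
  match x with
  | [:: MSig p (MPair ts v)] => if p == j then Some (ts, v) else None
  | _ => None
  end.

Definition conflicting (echo : proc -> seq msg) (j : proc) (ts : nat) (v : V) : bool :=
  [exists k : proc, has (fun x => match x with
       | MSig k' (MSig j' (MPair ts' w)) =>
           [&& k' == k, j' == j, ts' == ts & w != v]
       | _ => false end) (echo k)].

Definition ready_ok (rd : proc -> seq msg) (m : msg) (l : proc) : bool :=
  has (msg_eqb (MSig l (MReady m))) (rd l).

Definition refresh_one (i j : proc) (cont : prog) : prog :=
  PRead j RSend (fun x =>
    match send_content j x with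
    | None => cont
    | Some (ts, v) =>
      let m := MSig j (MPair ts v) in
      PWrite REcho (add (MSig i m))
      (read_all_regs REcho (fun ech =>
        let after_ready :=
          read_all_regs RReady (fun rd =>
            let S := [seq l <- enum proc | ready_ok rd m l] in
            if f.+1 <= size S then
              read_all_regs REcho (fun ech2 =>
                if conflicting ech2 j ts v then cont
                else PWrite RDeliver
                       (add (MDel m [seq MSig l (MReady m) | l <- S])) cont)
            else cont) in
        if conflicting ech j ts v then after_ready
        else PWrite RReady (add (MSig i (MReady m))) after_ready))
    end).

Definition refresh (i : proc) (cont : prog) : prog :=
  foldr (refresh_one i) cont (enum proc).

Definition ready_signer (m : msg) (x : msg) : option proc :=
  match x with
  | MSig l (MReady m') => if msg_eqb m' m then Some l else None
  | _ => None
  end.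

Definition valid_cert (m : msg) (sigma : seq msg) : bool :=
  [&& all (fun x => ready_signer m x != None) sigma,
      uniq (pmap (ready_signer m) sigma) & f.+1 <= size sigma].

Definition cert_val (j : proc) (ts : nat) (x : msg) : option V :=
  match x with
  | MDel (MSig j' (MPair ts' v)) sigma =>
      if [&& j' == j, ts' == ts & valid_cert (MSig j (MPair ts v)) sigma]
      then Some v else None
  | _ => None
  end.

Definition find_cert (dl : proc -> seq msg) (j : proc) (ts : nat) : option (V * msg) :=
  ohead (pmap (fun x => omap (fun v => (v, x)) (cert_val j ts x))
              (flatten [seq dl k | k <- enum proc])).

Definition deliver_prog (i j : proc) (ts : nat) : prog :=
  refresh i (read_all_regs RDeliver (fun dl =>
    match find_cert dl j ts with
    | None => PRet None
    | Some (v, x) => PWrite RDeliver (add x) (PRet (Some v))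
    end)).

Inductive op := OBcast : nat -> V -> op | ODeliver : proc -> nat -> op.
Inductive resp := RAck : resp | RVal : option V -> resp.
Inductive event := EInv : proc -> op -> event | ERes : proc -> resp -> event.

Definition ev_proc (e : event) : proc :=
  match e with EInv p _ => p | ERes p _ => p end.

Definition history := nat -> option event.

(* broadcast(ts,val) by i: write send_i, then repeatedly deliver(i,ts) *)
Definition init_prog (i : proc) (o : op) : prog :=
  match o with
  | OBcast ts v => PWrite RSend (fun _ => [:: MSig i (MPair ts v)]) (deliver_prog i i ts)
  | ODeliver j ts => deliver_prog i j ts
  end.

Inductive lstate := Idle : lstate | Running : op -> prog -> lstate.

Record config := Config {
  cmem : memory;
  cloc : proc -> lstate;
  ccorr : {set proc} }.

Definition init_config : config :=
  Config (fun _ _ => [::]) (fun _ => Idle) set0.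

Inductive label :=
| LInvoke : proc -> op -> label
| LStep : proc -> label
| LCorrupt : proc -> label
| LByz : proc -> rkind -> seq msg -> label.

Definition upd_mem (m : memory) (p : proc) (k : rkind) (x : seq msg) : memory :=
  fun q k' => if (q == p) && rk_eqb k k' then x else m q k'.

Definition upd_loc (L : proc -> lstate) (p : proc) (s : lstate) : proc -> lstate :=
  fun q => if q == p then s else L q.

(* the transition function; None = label not enabled *)
Definition exec_step (c : config) (l : label) : option (config * option event) :=
  match l with
  | LInvoke p o =>
      if (p \notin ccorr c) then
        match cloc c p with
        | Idle => Some (Config (cmem c) (upd_loc (cloc c) p (Running o (init_prog p o))) (ccorr c),
                        Some (EInv p o))
        | Running _ _ => None
        end
      else None
  | LStep p =>
      if (p \notin ccorr c) then
        match cloc c p with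
        | Idle => None
        | Running o (PRead q k cont) =>
            Some (Config (cmem c) (upd_loc (cloc c) p (Running o (cont (cmem c q k)))) (ccorr c), None)
        | Running o (PWrite k g pr) =>
            Some (Config (upd_mem (cmem c) p k (g (cmem c p k)))
                         (upd_loc (cloc c) p (Running o pr)) (ccorr c), None)
        | Running (OBcast ts v) (PRet r) =>
            match r with
            | Some _ => Some (Config (cmem c) (upd_loc (cloc c) p Idle) (ccorr c),
                              Some (ERes p RAck))
            | None => Some (Config (cmem c)
                              (upd_loc (cloc c) p (Running (OBcast ts v) (deliver_prog p p ts)))
                              (ccorr c), None)
            end
        | Running (ODeliver _ _) (PRet r) =>
            Some (Config (cmem c) (upd_loc (cloc c) p Idle) (ccorr c), Some (ERes p (RVal r)))
        end
      else None
  | LCorrupt p =>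
      if (p \notin ccorr c) && (#|ccorr c| < f) then
        Some (Config (cmem c) (cloc c) (p |: ccorr c), None)
      else None
  | LByz p k x =>
      if p \in ccorr c then
        Some (Config (upd_mem (cmem c) p k x) (cloc c) (ccorr c), None)
      else None
  end.

Definition is_execution (c : nat -> config) (l : nat -> label) : Prop :=
  c 0 = init_config /\
  forall t, exists ev, exec_step (c t) (l t) = Some (c t.+1, ev).

Definition hist (c : nat -> config) (l : nat -> label) : history :=
  fun t => match exec_step (c t) (l t) with Some (_, ev) => ev | None => None end.

(* unforgeable signatures: a corrupted process can only write a signature
   of a not-(yet)-corrupted process if it already appeared in shared memory *)
Definition unforgeable (c : nat -> config) (l : nat -> label) : Prop :=
  forall t p k x y q m,
    l t = LByz p k x -> List.In y x -> subterm (MSig q m) y -> q \notin ccorr (c t) ->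
    exists t0 q0 k0 z, t0 <= t /\ List.In z (cmem (c t0) q0 k0) /\ subterm (MSig q m) z.

Definition correct (c : nat -> config) (p : proc) : Prop :=
  forall t, p \notin ccorr (c t).

Definition fair (c : nat -> config) (l : nat -> label) : Prop :=
  forall p, correct c p -> forall t o pr, cloc (c t) p = Running o pr ->
    exists t', t <= t' /\ l t' = LStep p.

Definition A1 (c : nat -> config) (l : nat -> label) : Prop :=
  forall p, correct c p -> forall t, cloc (c t) p = Idle ->
    exists t' o, t <= t' /\ l t' = LInvoke p o.

Definition A2 (c : nat -> config) (l : nat -> label) : Prop :=
  forall p, correct c p -> forall t1 t2 ts v1 v2,
    l t1 = LInvoke p (OBcast ts v1) -> l t2 = LInvoke p (OBcast ts v2) -> t1 = t2.

Definition ev_of (p : proc) (e : option event) : bool :=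
  if e is Some e' then ev_proc e' == p else false.
Definition is_inv (e : option event) : bool :=
  if e is Some (EInv _ _) then true else false.

Definition next_of (H : history) (p : proc) (i j : nat) : Prop :=
  i < j /\ ev_of p (H j) /\ forall k, i < k < j -> ~~ ev_of p (H k).

Definition wf_hist (H : history) : Prop :=
  forall p,
    (forall j, ev_of p (H j) -> (forall k, k < j -> ~~ ev_of p (H k)) -> is_inv (H j)) /\
    (forall i j, ev_of p (H i) -> next_of H p i j -> is_inv (H i) != is_inv (H j)).

Definition resp_at (H : history) (i j : nat) (r : resp) : Prop :=
  exists p o, H i = Some (EInv p o) /\ next_of H p i j /\ H j = Some (ERes p r).

Definition complete (H : history) (i : nat) : Prop := exists j r, resp_at H i j r.

Definition is_bcast_at (H : history) (lin : nat -> option (nat * resp))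
    (j : proc) (ts : nat) (k : nat) (v : V) : Prop :=
  exists i r, lin k = Some (i, r) /\ H i = Some (EInv j (OBcast ts v)).

Definition seq_spec (H : history) (lin : nat -> option (nat * resp))
    (k : nat) (o : op) (r : resp) : Prop :=
  match o with
  | OBcast _ _ => r = RAck
  | ODeliver j ts =>
      (forall k' v, k' < k -> is_bcast_at H lin j ts k' v ->
         (forall k'' v', k'' < k' -> ~ is_bcast_at H lin j ts k'' v') -> r = RVal (Some v)) /\
      ((forall k' v, k' < k -> ~ is_bcast_at H lin j ts k' v) -> r = RVal None)
  end.

(* lin : the sequential history; entry (i, r) = operation invoked at
   position i of H, completed with response r *)
Definition linearizable (H : history) : Prop :=
  wf_hist H /\
  exists lin : nat -> option (nat * resp),
    (forall k i r, lin k = Some (i, r) ->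
        is_inv (H i) /\ forall j r0, resp_at H i j r0 -> r = r0) /\
    (forall k1 k2 i r1 r2, lin k1 = Some (i, r1) -> lin k2 = Some (i, r2) -> k1 = k2) /\
    (forall i, complete H i -> exists k r, lin k = Some (i, r)) /\
    (* real-time order is preserved *)
    (forall a ja ra kb ib rb, resp_at H a ja ra -> ja < ib -> lin kb = Some (ib, rb) ->
        exists ka r, ka < kb /\ lin ka = Some (a, r)) /\
    (forall k i r p o, lin k = Some (i, r) -> H i = Some (EInv p o) -> seq_spec H lin k o r).

Definition cnt (P : event -> bool) (H : history) (i : nat) : nat :=
  count (fun t => if H t is Some e then P e else false) (iota 0 i).

Definition kth_ev (P : event -> bool) (H : history) (k : nat) (e : event) : Prop :=
  exists i, H i = Some e /\ P e /\ cnt P H i = k.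

Definition restr_eq (P : event -> bool) (H1 H2 : history) : Prop :=
  forall k e, kth_ev P H1 k e <-> kth_ev P H2 k e.

Definition byz_linearizable (Cor : proc -> Prop) (H : history) : Prop :=
  forall C : {set proc}, (forall p, p \in C <-> Cor p) ->
    exists H' : history, linearizable H' /\ restr_eq (fun e => ev_proc e \in C) H H'.

Definition resilient (c : nat -> config) (l : nat -> label) : Prop :=
  forall p, correct c p -> forall t o, l t = LInvoke p o ->
    exists t' r, t < t' /\ hist c l t' = Some (ERes p r).

End Model.

(* A valid certificate for <ts,v>_j carries f+1 ready signatures of distinct processes,
   hence one of a correct process, and a correct process signs <ready,<ts,v>_j> only after
   echoing <ts,v>_j and then scanning every echo register without finding a conflicting
   echo.  Of two correct readies for the same (j,ts), the later scan sees the earlier echo,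
   so they carry the same value: all certificates for (j,ts) agree, and when j is correct
   they carry the value j broadcast.  Unforgeability is what makes these facts about
   correct signatures hold for every message in memory, including Byzantine registers.

   Conversely, once a correct broadcaster has written its send register no conflicting
   echo can appear, so every correct process eventually signs ready; as n > 2f these are
   more than f signatures, the broadcaster's next refresh writes a certificate, and its
   next scan of the deliver registers finds it.

   H' is H restricted to correct processes, plus a fictitious broadcast of a Byzantine
   sender at the moment the first certificate for its (sender, timestamp) enters the
   deliver register of a correct process.  Broadcasts are linearized at that moment,
   and a deliver at the first moment after its invocation at which the deliver registers
   of correct processes agree with its answer. *)

From mathcomp Require Import all_boot zify.
From Stdlib Require List.
From Stdlib Require Import Lia Classical ClassicalEpsilon.
Set Implicit Arguments. Unset Strict Implicit. Unset Printing Implicit Defensive.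

Local Arguments MPair {n V}.
Local Arguments PRet {n V}.
Local Arguments OBcast {n V}.
Local Arguments ODeliver {n V}.
Local Arguments RAck {V}.
Local Arguments Idle {n V}.
Local Arguments LStep {n V}.
Local Arguments LCorrupt {n V}.

Lemma rk_eqbP (a b : rkind) : reflect (a = b) (rk_eqb a b).
Proof. by apply: (iffP idP) => [|<-]; case: a; case: b. Qed.

Lemma rk_eqb_refl k : rk_eqb k k.
Proof. exact/rk_eqbP. Qed.

Definition least (P : nat -> Prop) (t : nat) := P t /\ forall t', t' < t -> ~ P t'.

Lemma least_unique P a b : least P a -> least P b -> a = b.
Proof.
move=> [Pa Ha] [Pb Hb].
by case: (ltngtP a b) => // Hab; [case: (Hb _ Hab) | case: (Ha _ Hab)].
Qed.

Lemma least_exists (P : nat -> Prop) t : P t -> exists t0, least P t0.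
Proof.
move=> Pt; apply: NNPP => Hno; elim/ltn_ind: t Pt => t IH Pt.
by apply: Hno; exists t; split => // t' /IH.
Qed.

Lemma least_le P t0 t : least P t0 -> P t -> t0 <= t.
Proof. by move=> [_ Hmin] Pt; rewrite leqNgt; apply/negP => /Hmin. Qed.

Lemma eventually_forall (T : finType) (P : T -> nat -> Prop) :
  (forall x, exists t0, forall t, t0 <= t -> P x t) -> exists t0, forall x t, t0 <= t -> P x t.
Proof.
move=> HP; suff [t0 Ht0] : exists t0, forall x, x \in enum T -> forall t, t0 <= t -> P x t.
  by exists t0 => x; apply: Ht0; rewrite mem_enum.
elim: (enum T) => [|x s [t0 Ht0]]; first by exists 0.
have [tx Htx] := HP x; exists (maxn t0 tx) => y; rewrite inE => /orP [/eqP -> | Hy] t Ht.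
  by apply: Htx; lia.
by apply: Ht0 => //; lia.
Qed.

Definition opick (T : Type) (P : T -> Prop) : option T :=
  match excluded_middle_informative (exists x, P x) with
  | left h => Some (proj1_sig (constructive_indefinite_description _ h))
  | right _ => None
  end.

Lemma opickP (T : Type) (P : T -> Prop) x :
  (forall y z, P y -> P z -> y = z) -> opick P = Some x <-> P x.
Proof.
move=> Puniq; rewrite /opick; case: excluded_middle_informative => [h|h].
  have Pw := proj2_sig (constructive_indefinite_description _ h).
  by split => [[<-] // | Px]; congr Some; exact: Puniq Pw Px.
by split => // Px; case: h; exists x.
Qed.

Lemma ohead_pmapP (A B : Type) (F : A -> option B) s y :
  ohead (pmap F s) = Some y -> exists2 x, List.In x s & F x = Some y.
Proof.
elim: s => [|x s IHs] //=; case Fx: (F x) => [b|] /=.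
  by case=> <-; exists x; [left|].
by move/IHs => [z Hz Fz]; exists z; [right|].
Qed.

Lemma ohead_pmapN (A B : Type) (F : A -> option B) s :
  ohead (pmap F s) = None -> forall x, List.In x s -> F x = None.
Proof.
elim: s => [|x s IHs] //=; case Fx: (F x) => [b|] //= Hs z [<- //|]; exact: IHs.
Qed.

Lemma has_In (T : Type) (P : pred T) (s : seq T) y : List.In y s -> P y -> has P s.
Proof. by elim: s => [|x s IH] //= [<- ->|/IH H /H ->] //; rewrite orbT. Qed.

Lemma hasP_In (T : Type) (P : pred T) (s : seq T) :
  has P s -> exists2 y, List.In y s & P y.
Proof.
elim: s => [|x s IH] //= /orP [Px|/IH [y Hy Py]]; first by exists x; [left|].
by exists y; [right|].
Qed.

Lemma mem_pmap_In (T : Type) (U : eqType) (F : T -> option U) (s : seq T) r :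
  r \in pmap F s -> exists2 y, List.In y s & F y = Some r.
Proof.
elim: s => [|x s IH] //=; case Fx: (F x) => [u|] /=; last first.
  by move/IH => [y Hy Fy]; exists y; [right|].
rewrite inE => /orP [/eqP ->|/IH [y Hy Fy]]; first by exists x; [left|].
by exists y; [right|].
Qed.

Section Messages.
Variables (n : nat) (V : eqType).
Local Notation proc := 'I_n.
Local Notation msg := (msg n V).

Lemma msg_eqb_eq : forall a b : msg, msg_eqb a b -> a = b.
Proof.
fix IH 1 => a b; case: a => [t v|p m|m|m s]; case: b => [t' v'|p' m'|m'|m' s'] //=.
- by case/andP => /eqP -> /eqP ->.
- by case/andP => /eqP -> /IH ->.
- by move/IH ->.
- case/andP => /IH -> Hs; congr MDel.
  by elim: s s' Hs => [|x s IHs] [|y s'] //= /andP [/IH -> /IHs ->].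
Qed.

Lemma msg_eqb_refl : forall a : msg, msg_eqb a a.
Proof.
fix IH 1 => a; case: a => [t v|p m|m|m s] //=.
- by rewrite !eqxx.
- by rewrite eqxx IH.
- by rewrite IH /=; elim: s => [|x s IHs] //=; rewrite IH IHs.
Qed.

Lemma msg_eqbP (a b : msg) : reflect (a = b) (msg_eqb a b).
Proof. by apply: (iffP idP) => [/msg_eqb_eq | ->]; last exact: msg_eqb_refl. Qed.

Lemma has_msg_eqbP (x : msg) s : reflect (List.In x s) (has (msg_eqb x) s).
Proof.
elim: s => [|y s IHs] /=; first by constructor.
case: (msg_eqbP x y) => [->|Hne] /=; first by constructor; left.
by apply: (iffP IHs) => [|[Eyx|//]]; [right | case: Hne].
Qed.

Lemma In_add (x z : msg) s : List.In z (add x s) <-> z = x \/ List.In z s.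
Proof.
rewrite /add; case: ifP => [/has_msg_eqbP Hx | _].
  by split => [|[-> //|//]]; right.
rewrite -cats1 List.in_app_iff /=.
by split => [[|[<-|[]]] | [->|]]; auto.
Qed.

Lemma In_add_old (x z : msg) s : List.In z s -> List.In z (add x s).
Proof. by move=> Hz; apply/In_add; right. Qed.

Lemma In_add_new (x : msg) s : List.In x (add x s).
Proof. by apply/In_add; left. Qed.

Lemma subterm_sig_inv (q p : proc) (w y : msg) :
  subterm (MSig q w) (MSig p y) -> (q = p /\ w = y) \/ subterm (MSig q w) y.
Proof. by move=> Hs; inversion Hs; subst; [left|right]. Qed.

Lemma subterm_pair_inv (q : proc) (w : msg) ts v : ~ subterm (MSig q w) (MPair ts v).
Proof. by move=> Hs; inversion Hs. Qed.

Lemma subterm_ready_inv (q : proc) (w m : msg) :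
  subterm (MSig q w) (MReady m) -> subterm (MSig q w) m.
Proof. by move=> Hs; inversion Hs; subst. Qed.

Lemma subterm_del_inv (q : proc) (w m : msg) s :
  subterm (MSig q w) (MDel m s) ->
  subterm (MSig q w) m \/ exists2 x, List.In x s & subterm (MSig q w) x.
Proof. by move=> Hs; inversion Hs; subst; [left | right; exists x]. Qed.

Lemma send_contentP (j : proc) x ts (v : V) :
  send_content j x = Some (ts, v) -> x = [:: MSig j (MPair ts v)].
Proof. by case: x => [|[] // p [] // ts' v' [|]] //=; case: eqP => // -> [-> ->]. Qed.

Lemma send_content_sig (j : proc) ts (v : V) :
  send_content j [:: MSig j (MPair ts v)] = Some (ts, v).
Proof. by rewrite /= eqxx. Qed.

Lemma ready_signers (m : msg) (S : seq proc) :
  pmap (ready_signer m) [seq MSig l (MReady m) | l <- S] = S.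
Proof. by elim: S => [|x S IH] //=; rewrite msg_eqb_refl /= IH. Qed.

Definition conflict_entry (k j : proc) ts (v : V) (x : msg) : bool :=
  match x with
  | MSig k' (MSig j' (MPair ts' w)) => [&& k' == k, j' == j, ts' == ts & w != v]
  | _ => false
  end.

Lemma conflict_entryP k j ts v (y : msg) :
  conflict_entry k j ts v y -> exists2 w, y = MSig k (MSig j (MPair ts w)) & w != v.
Proof.
case: y => // k' [] // j' [] // ts' w /=.
by case/and4P => /eqP -> /eqP -> /eqP -> Hw; exists w.
Qed.

Lemma conflictingPn (echo : proc -> seq msg) j ts v :
  reflect (forall k, ~~ has (conflict_entry k j ts v) (echo k)) (~~ conflicting echo j ts v).
Proof. by rewrite negb_exists; apply: forallP. Qed.

End Messages.

Section Programs.
Variables (n f : nat) (V : eqType).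
Local Notation proc := 'I_n.
Local Notation msg := (msg n V).
Local Notation prog := (prog n V).
Local Notation cert_val := (cert_val f).
Local Notation find_cert := (find_cert f).
Local Notation refresh_one := (refresh_one f).

Lemma In_flatten_regs (dl : proc -> seq msg) x (ks : seq proc) :
  List.In x (flatten [seq dl k | k <- ks]) <-> exists2 k, k \in ks & List.In x (dl k).
Proof.
elim: ks => [|k0 ks IH] /=; first by split => // [[]].
rewrite List.in_app_iff IH; split.
  by case=> [Hx|[k Hk Hx]]; [exists k0; rewrite ?mem_head | exists k; rewrite ?inE ?Hk ?orbT].
by case=> k; rewrite inE => /orP [/eqP ->|Hk] Hx; [left | right; exists k].
Qed.

Lemma find_certP (dl : proc -> seq msg) j ts v x :
  find_cert dl j ts = Some (v, x) -> (exists k, List.In x (dl k)) /\ cert_val j ts x = Some v.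
Proof.
move=> Hfind; have [y Hy] := ohead_pmapP Hfind.
case Ey: (cert_val j ts y) => [w|] //= [<- <-].
have [k _ Hk] := (In_flatten_regs dl y (enum proc)).1 Hy.
by split; first exists k.
Qed.

Lemma find_certN (dl : proc -> seq msg) j ts :
  find_cert dl j ts = None -> forall k x, List.In x (dl k) -> cert_val j ts x = None.
Proof.
move=> Hfind k x Hx; have Hnone := ohead_pmapN Hfind.
have /Hnone : List.In x (flatten [seq dl k | k <- enum proc]).
  by apply/In_flatten_regs; exists k; rewrite ?mem_enum.
by case: (cert_val j ts x).
Qed.

Lemma cert_valP j ts (x : msg) v :
  cert_val j ts x = Some v ->
  exists2 sigma, x = MDel (MSig j (MPair ts v)) sigma & valid_cert f (MSig j (MPair ts v)) sigma.
Proof.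
case: x => // -[] // j' [] // ts' v' s /=.
by case: ifP => // /and3P [/eqP -> /eqP -> Hv] [<-]; exists s.
Qed.

Lemma cert_val_target j j' ts ts' (x : msg) :
  cert_val j ts x <> None -> cert_val j' ts' x <> None -> j = j' /\ ts = ts'.
Proof.
case Ev: (cert_val j ts x) => [v|] // _; case Ev': (cert_val j' ts' x) => [v'|] // _.
have [sg Ex _] := cert_valP Ev; have [sg' Ex' _] := cert_valP Ev'.
by move: Ex'; rewrite Ex => -[-> ->].
Qed.

Lemma cert_val_ready_sigs (j : proc) ts (v : V) (S : seq proc) : uniq S -> f < size S ->
  cert_val j ts (MDel (MSig j (MPair ts v)) [seq MSig l (MReady (MSig j (MPair ts v))) | l <- S])
  = Some v.
Proof.
move=> Suniq Ssize; rewrite /= !eqxx /valid_cert ready_signers Suniq size_map Ssize andbT /=.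
suff -> : all (fun x => ready_signer (MSig j (MPair ts v)) x != None)
    [seq MSig l (MReady (MSig j (MPair ts v))) | l <- S] by [].
by rewrite all_map; apply/allP => x _; rewrite /preim /ready_signer msg_eqb_refl.
Qed.

Section Reaches.
Variable env : proc -> rkind -> seq msg -> Prop.

Inductive reaches (Q : prog -> Prop) : prog -> Prop :=
| reach_here pr : Q pr -> reaches Q pr
| reach_read q k cont :
    (forall x, env q k x -> reaches Q (cont x)) -> reaches Q (PRead q k cont)
| reach_write k g pr : reaches Q pr -> reaches Q (PWrite k g pr).

Lemma reaches_trans (Q Q' : prog -> Prop) pr :
  reaches Q pr -> (forall pr', Q pr' -> reaches Q' pr') -> reaches Q' pr.
Proof.
move=> HQ HQQ'; elim: HQ => {pr} [pr /HQQ' //|q k cont _ IH|k g pr _ IH].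
  by apply: reach_read => x /IH.
exact: reach_write.
Qed.

Lemma reaches_read_all (Q : prog -> Prop) k (ps : seq proc) (acc : proc -> seq msg) cont :
  (forall acc' : proc -> seq msg,
     (forall q, (q \in ps -> env q k (acc' q)) /\ (q \notin ps -> acc' q = acc q)) ->
     reaches Q (cont acc')) ->
  reaches Q (read_all k ps acc cont).
Proof.
elim: ps acc => [|p ps IH] acc Hcont /=; first by apply: Hcont => q; split.
apply: reach_read => x Hx; apply: IH => acc' Hacc'; apply: Hcont => q.
have [Hin Hout] := Hacc' q; rewrite inE negb_or; split.
  case: (boolP (q \in ps)) => [/Hin Henv _ //|/Hout Eq]; rewrite orbF => /eqP Eqp.
  by rewrite Eq Eqp eqxx.
by case/andP => Hqp /Hout ->; rewrite (negbTE Hqp).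
Qed.

Lemma reaches_read_all_regs (Q : prog -> Prop) k cont :
  (forall regs : proc -> seq msg, (forall q, env q k (regs q)) -> reaches Q (cont regs)) ->
  reaches Q (read_all_regs k cont).
Proof.
move=> Hcont; apply: reaches_read_all => regs Hregs; apply: Hcont => q.
by have [+ _] := Hregs q; apply; rewrite mem_enum.
Qed.

Lemma reaches_ret pr : reaches (fun pr' => exists r, pr' = PRet r) pr.
Proof.
elim: pr => [r|q k cont IH|k g pr IH]; last exact: reach_write.
  by apply: reach_here; exists r.
by apply: reach_read => x _.
Qed.

Lemma reaches_refresh_one (p j : proc) cont : reaches (eq cont) (refresh_one p j cont).
Proof.
apply: reach_read => x _; case: (send_content j x) => [[ts v]|]; last exact: reach_here.
apply: reach_write; apply: reaches_read_all_regs => ech _ /=.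
case: ifP => _; last apply: reach_write;
apply: reaches_read_all_regs => rd _; (case: ifP => _; last exact: reach_here);
apply: reaches_read_all_regs => ech2 _; (case: ifP => _; first exact: reach_here);
by apply: reach_write; apply: reach_here.
Qed.

Lemma reaches_refresh_end (p : proc) K js : reaches (eq K) (foldr (refresh_one p) K js).
Proof.
elim: js => [|j js IH] /=; first exact: reach_here.
by apply: reaches_trans (reaches_refresh_one p j _) _ => _ <-.
Qed.

Lemma reaches_refresh_at (p j : proc) K js : j \in js ->
  reaches (fun pr => exists js', pr = refresh_one p j (foldr (refresh_one p) K js'))
          (foldr (refresh_one p) K js).
Proof.
elim: js => [|j0 js IH] //=; rewrite inE; case: (eqVneq j j0) => [->|Hne] /= Hj.
  by apply: reach_here; exists js.
by apply: reaches_trans (reaches_refresh_one p j0 _) _ => _ <-; exact: IH.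
Qed.

End Reaches.
End Programs.

Section Execution.
Variables (n f : nat) (V : eqType).
Variables (c : nat -> config n V) (l : nat -> label n V).
Hypothesis exec : is_execution f c l.

Local Notation proc := 'I_n.
Local Notation msg := (msg n V).
Local Notation prog := (prog n V).
Local Notation op := (op n V).
Local Notation mem t := (cmem (c t)).
Local Notation loc t := (cloc (c t)).
Local Notation corr t := (ccorr (c t)).
Local Notation H := (hist f c l).
Local Notation deliver_prog := (@deliver_prog n f V).
Local Notation init_prog := (init_prog f).
Local Notation refresh_one := (refresh_one f).
Local Notation cert_val := (cert_val f).
Local Notation find_cert := (find_cert f).
Local Notation exec_step := (exec_step f).

(** * Steps of an execution *)

Variant step_spec (t : nat) : Prop :=
| StepInvoke p o : l t = LInvoke p o -> p \notin corr t -> loc t p = Idle ->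
    c t.+1 = Config (mem t) (upd_loc (loc t) p (Running o (init_prog p o))) (corr t) ->
    H t = Some (EInv p o) -> step_spec t
| StepRead p o q k cont : l t = LStep p -> p \notin corr t ->
    loc t p = Running o (PRead q k cont) ->
    c t.+1 = Config (mem t) (upd_loc (loc t) p (Running o (cont (mem t q k)))) (corr t) ->
    H t = None -> step_spec t
| StepWrite p o k g pr : l t = LStep p -> p \notin corr t -> loc t p = Running o (PWrite k g pr) ->
    c t.+1 = Config (upd_mem (mem t) p k (g (mem t p k)))
                    (upd_loc (loc t) p (Running o pr)) (corr t) ->
    H t = None -> step_spec t
| StepAck p ts v w : l t = LStep p -> p \notin corr t ->
    loc t p = Running (OBcast ts v) (PRet (Some w)) ->
    c t.+1 = Config (mem t) (upd_loc (loc t) p Idle) (corr t) ->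
    H t = Some (ERes p RAck) -> step_spec t
| StepRetry p ts v : l t = LStep p -> p \notin corr t ->
    loc t p = Running (OBcast ts v) (PRet None) ->
    c t.+1 = Config (mem t)
                    (upd_loc (loc t) p (Running (OBcast ts v) (deliver_prog p p ts))) (corr t) ->
    H t = None -> step_spec t
| StepReturn p j ts r : l t = LStep p -> p \notin corr t ->
    loc t p = Running (ODeliver j ts) (PRet r) ->
    c t.+1 = Config (mem t) (upd_loc (loc t) p Idle) (corr t) ->
    H t = Some (ERes p (RVal r)) -> step_spec t
| StepCorrupt p : l t = LCorrupt p -> p \notin corr t -> #|corr t| < f ->
    c t.+1 = Config (mem t) (loc t) (p |: corr t) -> H t = None -> step_spec t
| StepByz p k x : l t = LByz p k x -> p \in corr t ->
    c t.+1 = Config (upd_mem (mem t) p k x) (loc t) (corr t) -> H t = None -> step_spec t.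

Lemma exec_stepE t : exec_step (c t) (l t) = Some (c t.+1, H t).
Proof. by case: exec => _ /(_ t) [ev E]; rewrite /hist E. Qed.

Lemma stepP t : step_spec t.
Proof.
move: (exec_stepE t); rewrite /exec_step; case El: (l t) => [p o|p|p|p k x] /=.
- case: ifP => // Hp; case Hl: (loc t p) => [|o' pr] // [/esym Ec /esym Hh].
  exact: StepInvoke El Hp Hl Ec Hh.
- case: ifP => // Hp; case Hl: (loc t p) => [|o' pr] //.
  case: pr Hl => [[w|]|q k cont|k g pr] Hl; case: o' Hl => [ts v|j ts] Hl;
    case=> /esym Ec /esym Hh; first [exact: StepAck El Hp Hl Ec Hh | exact: StepRetry El Hp Hl Ec Hh
      | exact: StepReturn El Hp Hl Ec Hh | exact: StepRead El Hp Hl Ec Hh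
      | exact: StepWrite El Hp Hl Ec Hh].
- by case: ifP => // /andP [Hp Hc] [/esym Ec /esym Hh]; exact: StepCorrupt El Hp Hc Ec Hh.
- by case: ifP => // Hp [/esym Ec /esym Hh]; exact: StepByz El Hp Ec Hh.
Qed.

Lemma corr_step t : corr t \subset corr t.+1.
Proof.
case: (stepP t) => [p o _ _ _ E _|p o q k cont _ _ _ E _|p o k g pr _ _ _ E _|p ts v w _ _ _ E _
  |p ts v _ _ _ E _|p j ts r _ _ _ E _|p _ _ _ E _|p k x _ _ E _]; rewrite E //=.
exact: subsetUr.
Qed.

Lemma corr_mono t t' : t <= t' -> corr t \subset corr t'.
Proof.
move=> /subnK <-; elim: (t' - t) => [|d IH] //=.
by rewrite addSn; apply: subset_trans IH (corr_step _).
Qed.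

Lemma card_corr t : #|corr t| <= f.
Proof.
elim: t => [|t IH]; first by case: exec => -> _; rewrite cards0.
case: (stepP t) => [p o _ _ _ E _|p o q k cont _ _ _ E _|p o k g pr _ _ _ E _|p ts v w _ _ _ E _
  |p ts v _ _ _ E _|p j ts r _ _ _ E _|p _ Hp Hc E _|p k x _ _ E _]; rewrite E //=.
by rewrite cardsU1 Hp add1n.
Qed.

Lemma step_invoke t p o : l t = LInvoke p o ->
  [/\ loc t p = Idle, loc t.+1 p = Running o (init_prog p o) & H t = Some (EInv p o)].
Proof.
move=> El; have := exec_stepE t; rewrite /exec_step El.
case: ifP => // _; case: (loc t p) => // -[<- <-].
by rewrite /= /upd_loc eqxx.
Qed.

Lemma step_read t p o q k cont : l t = LStep p -> loc t p = Running o (PRead q k cont) ->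
  loc t.+1 p = Running o (cont (mem t q k)).
Proof.
move=> El Hl; have := exec_stepE t; rewrite /exec_step El Hl.
by case: ifP => // _; case: o {Hl} => [ts v|j ts] [<- _]; rewrite /= /upd_loc eqxx.
Qed.

Lemma step_write t p o k g pr : l t = LStep p -> loc t p = Running o (PWrite k g pr) ->
  loc t.+1 p = Running o pr /\ mem t.+1 p k = g (mem t p k).
Proof.
move=> El Hl; have := exec_stepE t; rewrite /exec_step El Hl.
case: ifP => // _; case: o {Hl} => [ts v|j ts] [<- _];
  by rewrite /= /upd_loc /upd_mem !eqxx rk_eqb_refl.
Qed.

Lemma step_retry t p ts v : l t = LStep p -> loc t p = Running (OBcast ts v) (PRet None) ->
  loc t.+1 p = Running (OBcast ts v) (deliver_prog p p ts).
Proof.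
move=> El Hl; have := exec_stepE t; rewrite /exec_step El Hl.
by case: ifP => // _ [<- _]; rewrite /= /upd_loc eqxx.
Qed.

Lemma step_ack t p ts v w : l t = LStep p -> loc t p = Running (OBcast ts v) (PRet (Some w)) ->
  loc t.+1 p = Idle /\ H t = Some (ERes p RAck).
Proof.
move=> El Hl; have := exec_stepE t; rewrite /exec_step El Hl.
by case: ifP => // _ [<- <-]; rewrite /= /upd_loc eqxx.
Qed.

Lemma step_return t p j ts r : l t = LStep p -> loc t p = Running (ODeliver j ts) (PRet r) ->
  loc t.+1 p = Idle /\ H t = Some (ERes p (RVal r)).
Proof.
move=> El Hl; have := exec_stepE t; rewrite /exec_step El Hl.
by case: ifP => // _ [<- <-]; rewrite /= /upd_loc eqxx.
Qed.

Lemma running_stable t p o pr : l t <> LStep p -> loc t p = Running o pr ->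
  loc t.+1 p = Running o pr.
Proof.
move=> Hns Hl; case: (stepP t) => [q o' El Hq Hl' E _|q o' q' k cont El _ _ E _
  |q o' k g pr' El _ _ E _|q ts v w El _ _ E _|q ts v El _ _ E _|q j ts r El _ _ E _
  |q _ _ _ E _|q k x _ _ E _]; rewrite E //= /upd_loc; case: eqP => // Eq; subst q.
- by rewrite Hl in Hl'.
all: by case: Hns.
Qed.

Lemma hist_invoke t p o : H t = Some (EInv p o) -> l t = LInvoke p o.
Proof.
case: (stepP t) => [q o' El _ _ _ Hh|q o' q' k cont _ _ _ _ Hh|q o' k g pr _ _ _ _ Hh
  |q ts v w _ _ _ _ Hh|q ts v _ _ _ _ Hh|q j ts r _ _ _ _ Hh|q _ _ _ _ Hh|q k x _ _ _ Hh];
  by rewrite Hh // => -[<- <-].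
Qed.

Lemma hist_response t p r : H t = Some (ERes p r) ->
  l t = LStep p /\ p \notin corr t /\
  ((exists ts v w, r = RAck /\ loc t p = Running (OBcast ts v) (PRet (Some w))) \/
   (exists j ts rr, r = RVal rr /\ loc t p = Running (ODeliver j ts) (PRet rr))).
Proof.
case: (stepP t) => [q o El _ _ _ Hh|q o q' k cont _ _ _ _ Hh|q o k g pr _ _ _ _ Hh
  |q ts v w El Hq Hl _ Hh|q ts v _ _ _ _ Hh|q j ts r' El Hq Hl _ Hh|q _ _ _ _ Hh|q k x _ _ _ Hh];
  rewrite Hh // => -[<- <-]; do 2 split => //.
- by left; exists ts, v, w.
- by right; exists j, ts, r'.
Qed.

(** * Correct processes write only justified messages *)

Definition appeared t (s : msg) :=
  exists t0 q k z, t0 <= t /\ List.In z (mem t0 q k) /\ subterm s z.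

Definition sigs_appeared t (x : msg) :=
  forall q w, subterm (MSig q w) x -> appeared t (MSig q w).

Definition ready_justified (q : proc) (m : msg) t :=
  exists j ts v te, [/\ m = MSig j (MPair ts v), te <= t, List.In (MSig q m) (mem te q REcho) &
    forall k, exists2 tk, te <= tk <= t & ~~ has (conflict_entry k j ts v) (mem tk k REcho)].

(* Correct processes sign broadcast pairs, readies and echoes; only the first two
   kinds of signature carry a guarantee. *)
Definition sign_justified (q : proc) (w : msg) t : Prop :=
  match w with
  | MPair ts v => exists2 t0, t0 < t & l t0 = LInvoke q (OBcast ts v)
  | MReady m => ready_justified q m t
  | _ => True
  end.

Definition sigs_justified (p : proc) t (x : msg) :=
  forall q w, subterm (MSig q w) x -> (q = p /\ sign_justified p w t) \/ appeared t (MSig q w).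

Definition write_justified (p : proc) (o : op) ti t k (old y : seq msg) :=
  (k = RSend /\ exists ts v,
     [/\ o = OBcast ts v, y = [:: MSig p (MPair ts v)], ti < t & l ti = LInvoke p o])
  \/ (k <> RSend /\ exists2 x, y = add x old & sigs_justified p t x).

Definition return_justified (p : proc) (o : op) ti t (r : option V) : Prop :=
  match o, r with
  | ODeliver j ts, None => exists2 s, ti < s <= t & forall q, exists2 tq, s <= tq <= t &
      forall x, List.In x (mem tq q RDeliver) -> cert_val j ts x = None
  | ODeliver j ts, Some v => exists w x,
      [/\ ti < w < t, cert_val j ts x = Some v & List.In x (mem w.+1 p RDeliver)]
  | OBcast ts _, Some v => exists w x,
      [/\ ti < w < t, cert_val p ts x = Some v & List.In x (mem w.+1 p RDeliver)]
  | OBcast _ _, None => True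
  end.

(* The remaining program pr of operation o (invoked by p at time ti), when run from
   time t on, only performs justified writes and justified returns. *)
Fixpoint prog_safe (p : proc) (o : op) ti t (pr : prog) {struct pr} : Prop :=
  match pr with
  | PRet r => forall t', t <= t' -> return_justified p o ti t' r
  | PRead q k cont => forall t', t <= t' -> prog_safe p o ti t'.+1 (cont (mem t' q k))
  | PWrite k g pr' => forall t', t <= t' -> mem t'.+1 p k = g (mem t' p k) ->
      write_justified p o ti t' k (mem t' p k) (g (mem t' p k)) /\ prog_safe p o ti t'.+1 pr'
  end.

Lemma sigs_appeared_mem t0 t q k z : t0 <= t -> List.In z (mem t0 q k) -> sigs_appeared t z.
Proof. by move=> Ht Hz q' w Hs; exists t0, q, k, z. Qed.

Lemma sigs_appeared_ready t m : sigs_appeared t m -> sigs_appeared t (MReady m).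
Proof. by move=> Hm q w /subterm_ready_inv /Hm. Qed.

Lemma sigs_appeared_del t m sigma : sigs_appeared t m ->
  (forall y, List.In y sigma -> sigs_appeared t y) -> sigs_appeared t (MDel m sigma).
Proof. by move=> Hm Hsigma q w /subterm_del_inv [/Hm //|[y /Hsigma]]; apply. Qed.

Lemma sigs_justified_appeared p t x : sigs_appeared t x -> sigs_justified p t x.
Proof. by move=> Hx q w /Hx; right. Qed.

Lemma sigs_justified_own p t w :
  sign_justified p w t -> sigs_appeared t w -> sigs_justified p t (MSig p w).
Proof. by move=> Hw Happ q w' /subterm_sig_inv [[-> ->]|/Happ]; [left|right]. Qed.

Lemma prog_safe_mono p o ti t t' pr : t <= t' -> prog_safe p o ti t pr -> prog_safe p o ti t' pr.
Proof.
by case: pr => [r|q k cont|k g pr] /= Ht Hsafe t'' Ht''; apply: Hsafe; apply: leq_trans Ht''.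
Qed.

Lemma prog_safe_read_all p o ti t k (ps : seq proc) (acc : proc -> seq msg) cont :
  (forall t' (acc' : proc -> seq msg), t <= t' ->
     (forall q, (q \in ps -> exists2 tq, t <= tq < t' & acc' q = mem tq q k) /\
                (q \notin ps -> acc' q = acc q)) ->
     prog_safe p o ti t' (cont acc')) ->
  prog_safe p o ti t (read_all k ps acc cont).
Proof.
elim: ps acc t => [|p0 ps IH] acc t Hcont /=; first by apply: Hcont => // q; split.
move=> t1 Ht1; apply: IH => t' acc' Ht' Hacc'.
apply: Hcont; first by apply: leq_trans Ht1 (ltnW Ht').
move=> q; have [Hin Hout] := Hacc' q; rewrite inE negb_or; split.
  case: (boolP (q \in ps)) => [/Hin [tq /andP [Htq1 Htq2] ->] _|/Hout ->].
    by exists tq; rewrite ?Htq2 ?(leq_trans Ht1 (ltnW Htq1)).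
  by rewrite orbF => /eqP ->; rewrite eqxx; exists t1; rewrite ?Ht1.
by case/andP => Hqp /Hout ->; rewrite (negbTE Hqp).
Qed.

Lemma prog_safe_read_all_regs p o ti t k cont :
  (forall t' (regs : proc -> seq msg), t <= t' ->
     (forall q, exists2 tq, t <= tq < t' & regs q = mem tq q k) ->
     prog_safe p o ti t' (cont regs)) ->
  prog_safe p o ti t (read_all_regs k cont).
Proof.
move=> Hcont; apply: prog_safe_read_all => t' regs Ht' Hregs; apply: Hcont => // q.
by have [+ _] := Hregs q; apply; rewrite mem_enum.
Qed.

Lemma prog_safe_refresh_one p o ti t j cont :
  prog_safe p o ti t cont -> prog_safe p o ti t (refresh_one p j cont).
Proof.
move=> Hcont t1 Ht1 /=.
have Hcont' t' : t <= t' -> prog_safe p o ti t' cont by move/prog_safe_mono; apply.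
case Es: (send_content j (mem t1 j RSend)) => [[ts v]|]; last by apply: Hcont'; lia.
set m := MSig j (MPair ts v).
have m_appeared t' : t1 <= t' -> sigs_appeared t' m.
  move=> Ht'; apply: (sigs_appeared_mem (q := j) (k := RSend) Ht').
  by rewrite (send_contentP Es); left.
move=> t2 Ht2 Hecho; split.
  right; split => //; exists (MSig p m) => //.
  by apply: sigs_justified_own => //; apply: m_appeared; lia.
apply: prog_safe_read_all_regs => t3 ech Ht3 Hech /=.
set after_ready := read_all_regs RReady _.
have safe_after_ready t' : t3 <= t' -> prog_safe p o ti t' after_ready.
  move=> Ht'; apply: prog_safe_read_all_regs => t5 rd Ht5 Hrd /=.
  case: ifP => _; last by apply: Hcont'; lia.
  apply: prog_safe_read_all_regs => t6 ech2 Ht6 _.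
  case: ifP => _; first by apply: Hcont'; lia.
  move=> t7 Ht7 _; split; last by apply: Hcont'; lia.
  right; split => //; eexists; first reflexivity.
  apply: sigs_justified_appeared; apply: sigs_appeared_del; first by apply: m_appeared; lia.
  move=> y /List.in_map_iff [r [<- /List.filter_In [_ /has_msg_eqbP Hr]]].
  have [tr /andP [_ Htr] Er] := Hrd r.
  by apply: (sigs_appeared_mem (q := r) (k := RReady) (_ : tr <= t7)); [lia | rewrite -Er].
case: ifP => Hconf; first exact: safe_after_ready.
move=> t4 Ht4 _; split; last by apply: safe_after_ready; lia.
right; split => //; exists (MSig p (MReady m)) => //.
apply: sigs_justified_own; last by apply/sigs_appeared_ready/m_appeared; lia.
exists j, ts, v, t2.+1; split => //; first by lia.
  by rewrite Hecho; exact: In_add_new.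
move=> k; have [tk /andP [Htk1 Htk2] Ek] := Hech k.
exists tk; first by apply/andP; split; lia.
by rewrite -Ek; move/negbT/conflictingPn: Hconf; apply.
Qed.

Lemma prog_safe_refresh p o ti t K js :
  prog_safe p o ti t K -> prog_safe p o ti t (foldr (refresh_one p) K js).
Proof. by move=> HK; elim: js => [|j js IH] //=; exact: prog_safe_refresh_one. Qed.

Lemma prog_safe_deliver p o ti t j ts :
  (o = ODeliver j ts \/ exists v, o = OBcast ts v /\ j = p) -> ti < t ->
  prog_safe p o ti t (deliver_prog p j ts).
Proof.
move=> Ho Hti; apply: prog_safe_refresh; apply: prog_safe_read_all_regs => t' dl Ht' Hdl.
case Ef: (find_cert dl j ts) => [[v x]|] /=.
  have [[k Hk] Hcert] := find_certP Ef; have [tk /andP [Htk1 Htk2] Ek] := Hdl k.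
  move=> t2 Ht2 Hdel; split.
    right; split => //; exists x => //; apply: sigs_justified_appeared.
    by apply: (sigs_appeared_mem (q := k) (k := RDeliver) (_ : tk <= t2)); [lia | rewrite -Ek].
  move=> t3 Ht3; have Hx : List.In x (mem t2.+1 p RDeliver) by rewrite Hdel; exact: In_add_new.
  by case: Ho => [->|[v0 [-> Ej]]]; [|subst j]; exists t2, x; split => //; lia.
move=> t3 Ht3; case: Ho => [->|[v0 [-> _]]] //=.
exists t; first by lia.
move=> q; have [tq /andP [Htq1 Htq2] Eq] := Hdl q.
by exists tq; [lia | rewrite -Eq; exact: find_certN Ef q].
Qed.

Lemma prog_safe_init p o ti : l ti = LInvoke p o -> prog_safe p o ti ti.+1 (init_prog p o).
Proof.
case: o => [ts v|j ts] Hl /=; last by apply: prog_safe_deliver; [left|].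
move=> t' Ht' _; split; first by left; split => //; exists ts, v; split => //; lia.
by apply: prog_safe_deliver; [right; exists v | lia].
Qed.

Definition running_inv t p o pr :=
  exists ti, [/\ ti < t, l ti = LInvoke p o, forall s, ti < s < t -> ~~ ev_of p (H s)
           & prog_safe p o ti t pr].

Lemma running_inv_step t p o pr pr' :
  running_inv t p o pr -> ~~ ev_of p (H t) ->
  (forall ti, ti < t -> prog_safe p o ti t pr -> prog_safe p o ti t.+1 pr') ->
  running_inv t.+1 p o pr'.
Proof.
move=> [ti [Hti Hinv Hev Hsafe]] Hevt Hstep; exists ti; split; [lia | by [] | | exact: Hstep].
move=> s /andP [Hs1 Hs2]; case: (ltngtP s t) => [Hst|Hst|->//]; last by lia.
by apply: Hev; lia.
Qed.

Lemma running_inv_keep t p o pr :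
  running_inv t p o pr -> ~~ ev_of p (H t) -> running_inv t.+1 p o pr.
Proof. by move=> Hinv Hev; apply: running_inv_step Hinv Hev _ => ti _; apply: prog_safe_mono. Qed.

Lemma running_invariant t p o pr :
  p \notin corr t -> loc t p = Running o pr -> running_inv t p o pr.
Proof.
elim: t o pr => [|t IH] o pr Hp Hl; first by move: Hl; case: exec => -> _.
have {}IH o' pr' : loc t p = Running o' pr' -> running_inv t p o' pr'.
  by apply: IH; apply: contra Hp; apply/subsetP/corr_step.
have keep (e : option (event n V)) : loc t p = Running o pr -> H t = e -> ~~ ev_of p e ->
    running_inv t.+1 p o pr.
  by move=> Hl0 He Hev; apply: running_inv_keep (IH _ _ Hl0) _; rewrite He.
case: (stepP t) => [q o' El _ Hl0 E Hh|q o' q' k cont El _ Hl0 E Hh|q o' k g pr' El _ Hl0 E Hh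
  |q ts v w El _ Hl0 E Hh|q ts v El _ Hl0 E Hh|q j ts r El _ Hl0 E Hh|q _ _ _ E Hh|q k x _ _ E Hh];
  rewrite E /= ?/upd_loc in Hl; try by apply: keep Hl Hh _.
- case: (eqVneq p q) Hl => [Epq|Hpq] Hl; last by apply: keep Hl Hh _; rewrite /= eq_sym.
  subst q; case: Hl => <- <-.
  by exists t; split => //; [move=> s; lia | exact: prog_safe_init].
- case: (eqVneq p q) Hl => [Epq|_] Hl; last exact: keep Hl Hh _.
  subst q; case: Hl => <- <-.
  apply: running_inv_step (IH _ _ Hl0) _ _ => [|ti _ Hsafe]; first by rewrite Hh.
  exact: Hsafe t (leqnn t).
- case: (eqVneq p q) Hl => [Epq|_] Hl; last exact: keep Hl Hh _.
  subst q; case: Hl => <- <-.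
  apply: running_inv_step (IH _ _ Hl0) _ _ => [|ti _ Hsafe]; first by rewrite Hh.
  by have [] := Hsafe t (leqnn t) (step_write El Hl0).2.
- case: (eqVneq p q) Hl => [//|Hpq] Hl.
  by apply: keep Hl Hh _; rewrite /= eq_sym.
- case: (eqVneq p q) Hl => [Epq|_] Hl; last exact: keep Hl Hh _.
  subst q; case: Hl => <- <-.
  apply: running_inv_step (IH _ _ Hl0) _ _ => [|ti Hti _]; first by rewrite Hh.
  by apply: prog_safe_deliver; [right; exists v | lia].
- case: (eqVneq p q) Hl => [//|Hpq] Hl.
  by apply: keep Hl Hh _; rewrite /= eq_sym.
Qed.

(** * Signatures and certificates in memory *)

Lemma mem_step t q k :
  [\/ mem t.+1 q k = mem t q k,
      exists o g pr ti, [/\ l t = LStep q, loc t q = Running o (PWrite k g pr),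
         mem t.+1 q k = g (mem t q k) & write_justified q o ti t k (mem t q k) (mem t.+1 q k)]
    | q \in corr t /\ l t = LByz q k (mem t.+1 q k)].
Proof.
case: (stepP t) => [p o _ _ _ E _|p o q' k' cont _ _ _ E _|p o k' g pr El Hp Hl E _
  |p ts v w _ _ _ E _|p ts v _ _ _ E _|p j ts r _ _ _ E _|p _ _ _ E _|p k' x El Hp E _];
  try by constructor 1; rewrite E.
- have : mem t.+1 q k = upd_mem (mem t) p k' (g (mem t p k')) q k by rewrite E.
  rewrite /upd_mem; case: (eqVneq q p) => [Eqp|_]; last by constructor 1.
  case: (rk_eqbP k' k) => [Ekk|_] /= Hm; last by constructor 1.
  subst q k'; constructor 2; have [ti [_ _ _ Hsafe]] := running_invariant Hp Hl.
  by exists o, g, pr, ti; rewrite Hm; have [] := Hsafe t (leqnn t) Hm.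
- have : mem t.+1 q k = upd_mem (mem t) p k' x q k by rewrite E.
  rewrite /upd_mem; case: (eqVneq q p) => [Eqp|_]; last by constructor 1.
  case: (rk_eqbP k' k) => [Ekk|_] /= Hm; last by constructor 1.
  by subst q k'; constructor 3; rewrite Hm.
Qed.

Lemma mem_grow t t' q k z : correct c q -> k <> RSend -> t <= t' ->
  List.In z (mem t q k) -> List.In z (mem t' q k).
Proof.
move=> Hq Hk /subnK <-; elim: (t' - t) => [|d IH] //= Hz; rewrite addSn.
case: (mem_step (d + t) q k) => [->|[o [g [pr [ti [_ _ _ Hw]]]]]|[Hqc _]]; first exact: IH.
  by case: Hw => [[//]|[_ [x -> _]]]; apply/In_add_old/IH.
by move: (Hq (d + t)); rewrite Hqc.
Qed.

Lemma ready_justified_mono q m t t' : t <= t' -> ready_justified q m t -> ready_justified q m t'.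
Proof.
move=> Ht [j [ts [v [te [Em Hte Hin Hk]]]]]; exists j, ts, v, te; split => //; first by lia.
by move=> k; have [tk Htk Hn] := Hk k; exists tk => //; lia.
Qed.

Lemma sign_justified_mono q w t t' : t <= t' -> sign_justified q w t -> sign_justified q w t'.
Proof.
case: w => //= [ts v|m] Ht; last exact: ready_justified_mono.
by case=> t0 Ht0 Hinv; exists t0 => //; lia.
Qed.

Definition good t (z : msg) :=
  forall q w, correct c q -> subterm (MSig q w) z -> sign_justified q w t.

Lemma good_mono t t' z : t <= t' -> good t z -> good t' z.
Proof. by move=> Ht Hz q w Hq /(Hz q w Hq); apply: sign_justified_mono. Qed.

Hypothesis unforg : unforgeable c l.

(* A new register content is written either by a correct process, whose program only
   writes justified signatures, or by a corrupted one, whose correct signatures have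
   already appeared (unforgeability). *)
Lemma good_mem t q k z : List.In z (mem t q k) -> good t z.
Proof.
elim/ltn_ind: t q k z => -[|t] IH q k z Hz; first by move: Hz; case: exec => -> _.
have good_appeared q' w : appeared t (MSig q' w) -> correct c q' -> sign_justified q' w t.+1.
  move=> [t1 [q1 [k1 [z1 [Ht1 [Hz1 Hs1]]]]]] Hq'.
  by apply: sign_justified_mono (IH t1 _ _ _ _ Hz1 _ _ Hq' Hs1); lia.
case: (mem_step t q k) => [Hm|[o [g [pr [ti [_ _ _ Hw]]]]]|[Hqc El]].
- by apply: (good_mono (leqnSn t)); apply: (IH t (ltnSn t) q k); rewrite -Hm.
- case: Hw => [[_ [ts [v [Eo Ez Hti Hinv]]]]|[_ [x Ez Hsig]]]; rewrite Ez in Hz.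
    case: Hz => [<-|[]] q' w Hq' /subterm_sig_inv [[-> ->]|/subterm_pair_inv //].
    by exists ti; rewrite -?Eo //; lia.
  case/In_add: Hz => [->|Hz] q' w Hq' Hs.
    case: (Hsig q' w Hs) => [[-> Hw]|/good_appeared]; last exact.
    by apply: sign_justified_mono Hw.
  exact: (good_mono (leqnSn t) (IH t (ltnSn t) q k z Hz)).
- by move=> q' w Hq' Hs; apply: good_appeared => //; exact: unforg El Hz Hs (Hq' t).
Qed.

Lemma corrupt_eventually : exists T, forall q, ~ correct c q -> q \in corr T.
Proof.
have [T HT] : exists T, forall q t, T <= t -> ~ correct c q -> q \in corr t.
  apply: eventually_forall => q; case: (classic (correct c q)) => [Hq|Hq]; first by exists 0.
  have [t0 Ht0] : exists t0, q \in corr t0.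
    by apply: NNPP => Hno; apply: Hq => t; apply/negP => Ht; apply: Hno; exists t.
  by exists t0 => t Ht _; apply: subsetP (corr_mono Ht) _ Ht0.
by exists T => q; apply: HT.
Qed.

Lemma correct_in_large_set (s : seq proc) :
  uniq s -> f < size s -> exists2 q, q \in s & correct c q.
Proof.
move=> Suniq Ssize; apply: NNPP => Hno; have [T HT] := corrupt_eventually.
have Hsub : {subset s <= enum (corr T)}.
  by move=> q Hq; rewrite mem_enum; apply: HT => Hc; apply: Hno; exists q.
have := leq_trans (uniq_leq_size Suniq Hsub); rewrite -cardE => /(_ _ (card_corr T)).
by rewrite leqNgt Ssize.
Qed.

Lemma cert_correct_ready j ts x v t q k :
  cert_val j ts x = Some v -> List.In x (mem t q k) ->
  exists2 r, correct c r & ready_justified r (MSig j (MPair ts v)) t.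
Proof.
move=> /cert_valP [sigma -> /and3P [Hall Huniq Hsize]] Hx.
set m := MSig j (MPair ts v).
have [r Hr Hcr] : exists2 r, r \in pmap (ready_signer m) sigma & correct c r.
  apply: correct_in_large_set Huniq _; rewrite size_pmap.
  suff /eqP -> : count (ready_signer m) sigma == size sigma by [].
  by rewrite -all_count; apply: sub_all Hall => y; case: (ready_signer m y).
exists r => //; have [y Hy Hry] := mem_pmap_In Hr.
have Ey : y = MSig r (MReady m).
  by move: Hry; case: y {Hy} => // r' [] // m' /=; case: ifP => // /msg_eqbP -> [->].
apply: (good_mem Hx Hcr (w := MReady m)).
by apply: st_del2 Hy _; rewrite Ey; exact: st_refl.
Qed.

Lemma ready_justified_agree r1 r2 j ts v1 v2 t1 t2 : correct c r1 -> correct c r2 ->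
  ready_justified r1 (MSig j (MPair ts v1)) t1 -> ready_justified r2 (MSig j (MPair ts v2)) t2 ->
  v1 = v2.
Proof.
have key a wa wb sa sb tb : correct c a -> sa <= sb ->
    List.In (MSig a (MSig j (MPair ts wa))) (mem sa a REcho) ->
    (forall k, exists2 tk, sb <= tk <= tb & ~~ has (conflict_entry k j ts wb) (mem tk k REcho)) ->
    wa = wb.
  move=> Ha Hs Hin Hclean; have [tk /andP [Htk _] Hn] := Hclean a.
  apply/eqP; apply: contraNT Hn => Hne; apply: has_In (mem_grow Ha _ _ Hin) _ => //=; first by lia.
  by rewrite !eqxx Hne.
move=> Hr1 Hr2 [j1 [ts1 [w1 [te1 [E1 _ Hecho1 Hclean1]]]]].
move=> [j2 [ts2 [w2 [te2 [E2 _ Hecho2 Hclean2]]]]].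
case: E1 => ? ? ?; case: E2 => ? ? ?; subst.
case: (leqP te1 te2) => Hte; first exact: key Hr1 Hte Hecho1 Hclean2.
by apply/esym; apply: key Hr2 (ltnW Hte) Hecho2 Hclean1.
Qed.

Lemma certs_agree j ts x1 x2 v1 v2 t1 t2 q1 q2 k1 k2 :
  cert_val j ts x1 = Some v1 -> List.In x1 (mem t1 q1 k1) ->
  cert_val j ts x2 = Some v2 -> List.In x2 (mem t2 q2 k2) -> v1 = v2.
Proof.
move=> C1 I1 C2 I2; have [r1 Hr1 R1] := cert_correct_ready C1 I1.
have [r2 Hr2 R2] := cert_correct_ready C2 I2; exact: ready_justified_agree Hr1 Hr2 R1 R2.
Qed.

Lemma cert_correct_sender j ts x v t q k :
  cert_val j ts x = Some v -> List.In x (mem t q k) -> correct c j ->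
  exists2 t0, t0 < t & l t0 = LInvoke j (OBcast ts v).
Proof.
move=> Hcert Hx Hj; have [sigma Ex _] := cert_valP Hcert.
by apply: (good_mem Hx Hj (w := MPair ts v)); rewrite Ex; apply/st_del1/st_refl.
Qed.

Hypothesis unique_ts : A2 c l.

Lemma no_conflicting_echo j ts v t0 k t q :
  correct c j -> l t0 = LInvoke j (OBcast ts v) -> ~~ has (conflict_entry k j ts v) (mem t q REcho).
Proof.
move=> Hj Hinv; apply/negP => /hasP_In [y Hy /conflict_entryP [w Ey Hw]].
have [t1 _ Hinv1] : sign_justified j (MPair ts w) t.
  by apply: (good_mem Hy Hj (w := MPair ts w)); rewrite Ey; apply/st_sig/st_refl.
have Et := unique_ts Hj Hinv1 Hinv; subst t1.
by move: Hinv1 Hw; rewrite Hinv => -[->]; rewrite eqxx.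
Qed.

(** * Liveness *)

Hypothesis fair_sched : fair c l.
Hypothesis invokes_forever : A1 c l.

Lemma eventually_steps p o pr t : correct c p -> loc t p = Running o pr ->
  exists t', [/\ t <= t', l t' = LStep p & loc t' p = Running o pr].
Proof.
move=> Hp Hl; have [t1 [Ht1 El1]] := fair_sched Hp Hl.
rewrite -(subnK Ht1) in El1; move: (t1 - t) El1 => d El1.
elim: d t Hl El1 {Ht1} => [|d IH] t Hl El1; first by exists t.
case: (classic (l t = LStep p)) => [Es|Ens]; first by exists t.
have [|t' [Ht' Es' Hl']] := IH t.+1 (running_stable Ens Hl); first by rewrite -addSnnS.
by exists t'; split => //; lia.
Qed.

Lemma reaches_run (env : proc -> rkind -> seq msg -> Prop) (Q : prog -> Prop) p o pr t :
  correct c p -> loc t p = Running o pr -> reaches env Q pr ->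
  (forall s q k, t <= s -> env q k (mem s q k)) ->
  exists t' pr', [/\ t <= t', loc t' p = Running o pr' & Q pr'].
Proof.
move=> Hp Hl Hreach; elim: Hreach t Hl => {pr} [pr HQ|q k cont _ IH|k g pr _ IH] t Hl Henv.
- by exists t, pr.
- have [t1 [Ht1 El1 Hl1]] := eventually_steps Hp Hl.
  have [|t' [pr' [Ht' Hl' HQ]]] := IH _ (Henv t1 q k Ht1) t1.+1 (step_read El1 Hl1).
    by move=> s q' k' Hs; apply: Henv; lia.
  by exists t', pr'; split => //; lia.
- have [t1 [Ht1 El1 Hl1]] := eventually_steps Hp Hl.
  have [|t' [pr' [Ht' Hl' HQ]]] := IH t1.+1 (step_write El1 Hl1).1.
    by move=> s q' k' Hs; apply: Henv; lia.
  by exists t', pr'; split => //; lia.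
Qed.

Definition any_env : proc -> rkind -> seq msg -> Prop := fun _ _ _ => True.

Lemma eventually_returns p o pr t : correct c p -> loc t p = Running o pr ->
  exists t' r, [/\ t <= t', l t' = LStep p & loc t' p = Running o (PRet r)].
Proof.
move=> Hp Hl.
have [t1 [pr' [Ht1 Hl1 [r Er]]]] := reaches_run Hp Hl (reaches_ret any_env pr) (fun _ _ _ _ => I).
subst pr'; have [t2 [Ht2 El2 Hl2]] := eventually_steps Hp Hl1.
by exists t2, r; split => //; lia.
Qed.

Lemma eventually_delivering p t : correct c p ->
  exists t' o j ts, t <= t' /\ loc t' p = Running o (deliver_prog p j ts).
Proof.
move=> Hp.
have from_idle t0 : loc t0 p = Idle ->
    exists t' o j ts, t0 <= t' /\ loc t' p = Running o (deliver_prog p j ts).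
  move=> Hl0; have [t1 [o [Ht1 El1]]] := invokes_forever Hp Hl0.
  have [_ Hl1 _] := step_invoke El1; case: o El1 Hl1 => [ts v|j ts] El1 Hl1.
    have [t2 [Ht2 El2 Hl2]] := eventually_steps Hp Hl1.
    by exists t2.+1, (OBcast ts v), p, ts; split; [lia | exact: (step_write El2 Hl2).1].
  by exists t1.+1, (ODeliver j ts), j, ts; split; first lia.
case El: (loc t p) => [|o pr]; first exact: from_idle.
have [t1 [r [Ht1 El1 Hl1]]] := eventually_returns Hp El.
have later_idle : loc t1.+1 p = Idle ->
    exists t' o j ts, t <= t' /\ loc t' p = Running o (deliver_prog p j ts).
  by move/from_idle => [t' [o' [j [ts [Ht' Hl']]]]]; exists t', o', j, ts; split => //; lia.
case: o El Hl1 => [ts v|j ts] El Hl1; last exact/later_idle/(step_return El1 Hl1).1.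
case: r Hl1 => [w|] Hl1; first exact/later_idle/(step_ack El1 Hl1).1.
by exists t1.+1, (OBcast ts v), p, ts; split; [lia | exact: step_retry].
Qed.

Lemma eventually_refreshes p t i : correct c p ->
  exists t' o cont, t <= t' /\ loc t' p = Running o (refresh_one p i cont).
Proof.
move=> Hp; have [t1 [o [j [ts [Ht1 Hl1]]]]] := eventually_delivering t Hp.
have [t2 [pr [Ht2 Hl2 [js Epr]]]] :=
  reaches_run Hp Hl1 (reaches_refresh_at f any_env p _ (mem_enum _ i)) (fun _ _ _ _ => I).
by subst pr; eexists t2, o, _; split; [lia | exact: Hl2].
Qed.

Definition bcast_env (i : proc) ts (v : V) : proc -> rkind -> seq msg -> Prop :=
  fun q k x => (q = i -> k = RSend -> x = [:: MSig i (MPair ts v)]) /\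
               (k = REcho -> forall k', ~~ has (conflict_entry k' i ts v) x).

Lemma bcast_env_after i ts v t0 t1 : correct c i -> l t0 = LInvoke i (OBcast ts v) ->
  (forall s, t1 <= s -> mem s i RSend = [:: MSig i (MPair ts v)]) ->
  forall s q k, t1 <= s -> bcast_env i ts v q k (mem s q k).
Proof.
move=> Hi Hinv Hsend s q k Hs; split; first by move=> -> ->; exact: Hsend.
by move=> -> k'; exact: no_conflicting_echo Hi Hinv.
Qed.

Lemma reaches_ready_write k i ts v cont :
  reaches (bcast_env i ts v)
    (fun pr => exists AR, pr = PWrite RReady (add (MSig k (MReady (MSig i (MPair ts v))))) AR)
    (refresh_one k i cont).
Proof.
apply: reach_read => x [Hx _]; rewrite (Hx erefl erefl) send_content_sig /=.
apply: reach_write; apply: reaches_read_all_regs => ech Hech /=.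
have /negbTE -> : ~~ conflicting ech i ts v by apply/conflictingPn => k'; exact: (Hech k').2.
by apply: reach_here; eexists.
Qed.

Lemma eventually_ready i ts v t0 t1 k : correct c i -> l t0 = LInvoke i (OBcast ts v) ->
  (forall s, t1 <= s -> mem s i RSend = [:: MSig i (MPair ts v)]) -> correct c k ->
  exists T, forall s, T <= s -> List.In (MSig k (MReady (MSig i (MPair ts v)))) (mem s k RReady).
Proof.
move=> Hi Hinv Hsend Hk; have [t2 [o [cont [Ht2 Hl2]]]] := eventually_refreshes t1 i Hk.
have Henv s q k' : t2 <= s -> bcast_env i ts v q k' (mem s q k').
  by move=> Hs; apply: bcast_env_after Hi Hinv Hsend _ _ _ _; lia.
have [t3 [pr [_ Hl3 [AR Epr]]]] := reaches_run Hk Hl2 (reaches_ready_write k i ts v cont) Henv.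
subst pr; have [t4 [_ El4 Hl4]] := eventually_steps Hk Hl3.
exists t4.+1 => s Hs; apply: (mem_grow Hk _ Hs) => //.
by rewrite (step_write El4 Hl4).2; exact: In_add_new.
Qed.

Lemma eventually_all_ready i ts v t0 t1 : correct c i -> l t0 = LInvoke i (OBcast ts v) ->
  (forall s, t1 <= s -> mem s i RSend = [:: MSig i (MPair ts v)]) ->
  exists T, forall k s, T <= s -> correct c k ->
    List.In (MSig k (MReady (MSig i (MPair ts v)))) (mem s k RReady).
Proof.
move=> Hi Hinv Hsend; apply: eventually_forall => k.
case: (classic (correct c k)) => [Hk|Hk]; last by exists 0.
by have [T HT] := eventually_ready Hi Hinv Hsend Hk; exists T => s /HT.
Qed.

Hypothesis few_faulty : 2 * f < n.

Lemma many_satisfy (P : pred proc) : (forall q, correct c q -> P q) ->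
  f < size [seq q <- enum proc | P q].
Proof.
move=> HP; rewrite ltnNge; apply/negP => Hle.
have [q Hq Hc] : exists2 q, q \in [seq q <- enum proc | ~~ P q] & correct c q.
  apply: correct_in_large_set; first by apply: filter_uniq; exact: enum_uniq.
  have : size [seq q <- enum proc | P q] + size [seq q <- enum proc | ~~ P q] = n.
    by rewrite !size_filter count_predC size_enum_ord.
  by lia.
by move: Hq; rewrite mem_filter (HP q Hc).
Qed.

Definition cert_env (i : proc) ts (v : V) : proc -> rkind -> seq msg -> Prop :=
  fun q k x => bcast_env i ts v q k x /\
    (k = RReady -> correct c q -> List.In (MSig q (MReady (MSig i (MPair ts v)))) x).

Lemma reaches_cert_write p ts v cont :
  reaches (cert_env p ts v)
    (fun pr => exists2 X, cert_val p ts X = Some v & pr = PWrite RDeliver (add X) cont)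
    (refresh_one p p cont).
Proof.
have no_conflict ech : (forall q, cert_env p ts v q REcho (ech q)) -> ~~ conflicting ech p ts v.
  by move=> Hech; apply/conflictingPn => k'; exact: (Hech k').1.2.
apply: reach_read => x [[Hx _] _]; rewrite (Hx erefl erefl) send_content_sig /=.
apply: reach_write; apply: reaches_read_all_regs => ech /no_conflict /negbTE -> /=.
apply: reach_write; apply: reaches_read_all_regs => rd Hrd /=.
set S := [seq l0 <- enum proc | _].
have HS : f < size S.
  by apply: many_satisfy => q Hq; apply/has_msg_eqbP; exact: (Hrd q).2.
rewrite HS.
apply: reaches_read_all_regs => ech2 /no_conflict /negbTE ->.
apply: reach_here; eexists; last reflexivity.
by apply: cert_val_ready_sigs HS; apply: filter_uniq; exact: enum_uniq.
Qed.

Definition deliver_tail (p j : proc) ts : prog :=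
  read_all_regs RDeliver (fun dl =>
    match find_cert dl j ts with
    | None => PRet None
    | Some (v, x) => PWrite RDeliver (add x) (PRet (Some v))
    end).

Lemma deliver_progE p j ts :
  deliver_prog p j ts = foldr (refresh_one p) (deliver_tail p j ts) (enum proc).
Proof. by []. Qed.

Lemma reaches_ack p ts (X : msg) v js :
  cert_val p ts X = Some v ->
  reaches (fun q k x => q = p -> k = RDeliver -> List.In X x)
          (fun pr => exists w, pr = PRet (Some w))
    (foldr (refresh_one p) (deliver_tail p p ts) js).
Proof.
move=> HX; apply: reaches_trans (reaches_refresh_end f _ p _ js) _ => _ <-.
apply: reaches_read_all_regs => dl Hdl; have HXp := Hdl p erefl erefl.
case Ef: (find_cert dl p ts) => [[w x]|]; last by rewrite (find_certN Ef HXp) in HX.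
by apply/reach_write/reach_here; exists w.
Qed.

Lemma running_bcast_settles p ts v s pr : correct c p -> loc s p = Running (OBcast ts v) pr ->
  exists2 s', s <= s' &
    H s' = Some (ERes p RAck) \/ loc s'.+1 p = Running (OBcast ts v) (deliver_prog p p ts).
Proof.
move=> Hp Hl; have [s1 [r [Hs1 El1 Hl1]]] := eventually_returns Hp Hl.
exists s1 => //; case: r Hl1 => [w|] Hl1; first by left; exact: (step_ack El1 Hl1).2.
by right; exact: step_retry.
Qed.

Lemma certified_retry_acks p ts v s : correct c p ->
  loc s p = Running (OBcast ts v) (deliver_prog p p ts) ->
  (forall s' q k, s <= s' -> cert_env p ts v q k (mem s' q k)) ->
  exists2 s', s <= s' & H s' = Some (ERes p RAck).
Proof.
move=> Hp Hl Henv; rewrite deliver_progE in Hl.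
have [s1 [pr [Hs1 Hl1 [js Epr]]]] :=
  reaches_run Hp Hl (reaches_refresh_at f any_env p _ (mem_enum _ p)) (fun _ _ _ _ => I).
subst pr; have [s2 [pr [Hs2 Hl2 [X HX Epr]]]] :=
  reaches_run Hp Hl1 (reaches_cert_write _ _ _ _)
              (fun s' q k Hs' => Henv s' q k (leq_trans Hs1 Hs')).
subst pr; have [s3 [Hs3 El3 Hl3]] := eventually_steps Hp Hl2.
have [Hl4 Hdel] := step_write El3 Hl3.
have HXmem s' q k : s3.+1 <= s' -> q = p -> k = RDeliver -> List.In X (mem s' q k).
  by move=> Hs' -> ->; apply: (mem_grow Hp _ Hs') => //; rewrite Hdel; exact: In_add_new.
have [s5 [pr [Hs5 Hl5 [w Epr]]]] := reaches_run Hp Hl4 (reaches_ack js HX) HXmem.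
subst pr; have [s6 [Hs6 El6 Hl6]] := eventually_steps Hp Hl5.
by exists s6; [lia | exact: (step_ack El6 Hl6).2].
Qed.

Section PendingBroadcast.
Variables (p : proc) (t0 ts : nat) (v : V).
Hypothesis p_correct : correct c p.
Hypothesis p_bcast : l t0 = LInvoke p (OBcast ts v).

Definition unacked t := forall s, t0 < s < t -> H s <> Some (ERes p RAck).

Lemma unacked_running t : t0 < t -> unacked t -> exists pr, loc t p = Running (OBcast ts v) pr.
Proof.
elim: t => // t IH; rewrite ltnS leq_eqVlt => /orP [/eqP <- _|Ht Hun].
  by have [_ -> _] := step_invoke p_bcast; eexists.
have [|pr Hl] := IH Ht; first by move=> s Hs; apply: Hun; lia.
case: (classic (l t = LStep p)) => [El|Ens]; last by exists pr; exact: running_stable.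
case: pr Hl => [[w|]|q k cont|k g pr] Hl.
- by case: (Hun t); [lia | exact: (step_ack El Hl).2].
- by eexists; exact: step_retry El Hl.
- by eexists; exact: step_read El Hl.
- by eexists; exact: (step_write El Hl).1.
Qed.

Lemma unacked_send : exists2 t1, t0 < t1 &
  forall s, t1 <= s -> unacked s -> mem s p RSend = [:: MSig p (MPair ts v)].
Proof.
have [_ Hl0 _] := step_invoke p_bcast.
have [t1 [Ht1 El1 Hl1]] := eventually_steps p_correct Hl0.
exists t1.+1 => [|s /subnK <-]; first by lia.
elim: (s - t1.+1) => [_|d IH Hun]; first exact: (step_write El1 Hl1).2.
have {}Hun : unacked (d + t1.+1) by move=> s' Hs'; apply: Hun; lia.
rewrite addSn; case: (mem_step (d + t1.+1) p RSend) => [->|[o [g [pr [ti [_ Hl Hm Hw]]]]]|[Hc _]].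
- exact: IH.
- have [|pr' Hl'] := unacked_running _ Hun; first by lia.
  have Eo : o = OBcast ts v by move: Hl; rewrite Hl' => -[->].
  by case: Hw => [[_ [ts' [v' [Eo' -> _ _]]]]|[]] //; move: Eo'; rewrite Eo => -[-> ->].
- by move: (p_correct (d + t1.+1)); rewrite Hc.
Qed.

Lemma bcast_acked : exists2 t, t0 < t & H t = Some (ERes p RAck).
Proof.
apply: NNPP => Hno; have never t : unacked t by move=> s /andP [Hs _] Hack; apply: Hno; exists s.
have [t1 Ht1 Hsend] := unacked_send.
have {}Hsend s : t1 <= s -> mem s p RSend = [:: MSig p (MPair ts v)].
  by move=> Hs; exact: Hsend s Hs (never s).
have [T HT] := eventually_all_ready p_correct p_bcast Hsend.
have [|pr Hl] := @unacked_running (maxn T t1) _ (never _); first by lia.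
have [s Hs [Hack|Hretry]] := running_bcast_settles p_correct Hl.
  by apply: Hno; exists s => //; lia.
have [|s' Hs' Hack] := certified_retry_acks p_correct Hretry.
  move=> s' q k Hs'; split; first by apply: bcast_env_after p_correct p_bcast Hsend _ _ _ _; lia.
  by move=> -> Hq; apply: HT => //; lia.
by apply: Hno; exists s' => //; lia.
Qed.

End PendingBroadcast.

Lemma resilience : resilient f c l.
Proof.
move=> p Hp t o Hinv; have [_ Hl _] := step_invoke Hinv.
case: o Hinv Hl => [ts v|j ts] Hinv Hl.
  by have [t' Ht' Hack] := bcast_acked Hp Hinv; exists t', RAck.
have [t1 [r [Ht1 El1 Hl1]]] := eventually_returns Hp Hl.
by exists t1, (RVal r); split; [lia | exact: (step_return El1 Hl1).2].
Qed.

(** * The linearization *)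

Variable C : {set proc}.
Hypothesis C_correct : forall p, p \in C <-> correct c p.

Definition certified_val j ts v t :=
  exists q x, [/\ q \in C, List.In x (mem t q RDeliver) & cert_val j ts x = Some v].

Definition certified j ts t := exists v, certified_val j ts v t.

Definition first_certified j ts := least (certified j ts).

Lemma certified_mono j ts t t' : t <= t' -> certified j ts t -> certified j ts t'.
Proof.
move=> Ht [v [q [x [Hq Hx Hv]]]]; exists v, q, x; split => //.
exact: mem_grow (proj1 (C_correct q) Hq) _ Ht Hx.
Qed.

Lemma certified_val_agree j ts v1 v2 t1 t2 :
  certified_val j ts v1 t1 -> certified_val j ts v2 t2 -> v1 = v2.
Proof. by move=> [q1 [x1 [_ I1 C1]]] [q2 [x2 [_ I2 C2]]]; exact: certs_agree C1 I1 C2 I2. Qed.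

Lemma certified_0 j ts : ~ certified j ts 0.
Proof. by move=> [v [q [x [_ Hx _]]]]; move: Hx; case: exec => -> _. Qed.

Lemma first_certified_write j ts s : first_certified j ts s.+1 ->
  exists q X, [/\ l s = LStep q, mem s.+1 q RDeliver = add X (mem s q RDeliver),
                  ~ List.In X (mem s q RDeliver) & cert_val j ts X <> None].
Proof.
move=> [[v [q [x [Hq Hx Hv]]]] Hfirst].
have Hold : ~ List.In x (mem s q RDeliver) by move=> Hin; apply: (Hfirst s) => //; exists v, q, x.
case: (mem_step s q RDeliver) => [Hm|[o [g [pr [ti [El _ Hm Hw]]]]]|[Hc _]].
- by case: Hold; rewrite -Hm.
- case: Hw => [[//]|[_ [X EX _]]].
  have EXx : X = x by move: Hx; rewrite EX => /In_add [].
  by subst X; exists q, x; rewrite Hv; split.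
- by have := proj1 (C_correct q) Hq s; rewrite Hc.
Qed.

(* A step adds at most one message to at most one register. *)
Lemma first_certified_same j ts j' ts' t :
  first_certified j ts t -> first_certified j' ts' t -> j = j' /\ ts = ts'.
Proof.
case: t => [[/certified_0 //]|s] /first_certified_write [q [X [El EX HX Hc]]].
move=> /first_certified_write [q' [X' [El' EX' HX' Hc']]].
move: El'; rewrite El => -[Eq]; subst q'.
have EXX : X' = X.
  have : List.In X' (mem s.+1 q RDeliver) by rewrite EX'; exact: In_add_new.
  by rewrite EX => /In_add [].
by subst X'; exact: cert_val_target Hc Hc'.
Qed.

Definition responds (p : proc) ti tr (r : resp V) :=
  [/\ ti < tr, H tr = Some (ERes p r) & forall s, ti < s < tr -> ~~ ev_of p (H s)].

Lemma responds_unique p ti tr tr' r r' :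
  responds p ti tr r -> responds p ti tr' r' -> tr = tr' /\ r = r'.
Proof.
move=> [Htr Hh Hev] [Htr' Hh' Hev']; case: (ltngtP tr tr') => Ht.
- by have := Hev' tr; rewrite Htr Ht Hh /= eqxx => /(_ isT).
- by have := Hev tr'; rewrite Htr' Ht Hh' /= eqxx => /(_ isT).
- by subst; move: Hh'; rewrite Hh => -[->].
Qed.

Lemma response_justified p ti tr o r : correct c p -> l ti = LInvoke p o -> responds p ti tr r ->
  exists rr, return_justified p o ti tr rr /\
    match o with OBcast _ _ => r = RAck /\ rr <> None | ODeliver _ _ => r = RVal rr end.
Proof.
move=> Hp Hinv [Htr Hh Hev]; have [_ [Hpc Hret]] := hist_response Hh.
have [o' [rr [Hl Hr]]] : exists o' rr, loc tr p = Running o' (PRet rr) /\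
    match o' with OBcast _ _ => r = RAck /\ rr <> None | ODeliver _ _ => r = RVal rr end.
  case: Hret => [[ts [v [w [-> Hl]]]]|[j [ts [rr [-> Hl]]]]].
    by exists (OBcast ts v), (Some w).
  by exists (ODeliver j ts), rr.
have [ti' [Hti' Hinv' Hev' Hsafe]] := running_invariant Hpc Hl.
have Eti : ti' = ti.
  have [_ _ Hh'] := step_invoke Hinv'; have [_ _ Hhi] := step_invoke Hinv.
  case: (ltngtP ti' ti) => // Hlt.
    by have := Hev' ti; rewrite Hlt Htr Hhi /= eqxx => /(_ isT).
  by have := Hev ti'; rewrite Hlt Hti' Hh' /= eqxx => /(_ isT).
subst ti'; move: Hinv'; rewrite Hinv => -[Eo]; subst o'.
by exists rr; split => //; exact: Hsafe tr (leqnn _).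
Qed.

Definition is_idle (s : lstate n V) : bool := if s is Idle then true else false.

Lemma idle_step p s : ~~ ev_of p (H s) -> is_idle (loc s.+1 p) = is_idle (loc s p).
Proof.
case: (stepP s) => [q o _ _ Hl E Hh|q o q' k cont _ _ Hl E Hh|q o k g pr _ _ Hl E Hh
  |q ts v w _ _ Hl E Hh|q ts v _ _ Hl E Hh|q j ts r _ _ Hl E Hh|q _ _ _ E Hh|q k x _ _ E Hh];
  rewrite Hh E /= ?/upd_loc => Hev //; case: eqP => // Epq; subst q; rewrite ?Hl //.
all: by rewrite eqxx in Hev.
Qed.

Lemma idle_steps p a b : a <= b -> (forall s, a <= s < b -> ~~ ev_of p (H s)) ->
  is_idle (loc b p) = is_idle (loc a p).
Proof.
move=> /subnK <-; elim: (b - a) => [|d IH] //= Hquiet.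
rewrite addSn idle_step; last by apply: Hquiet; lia.
by apply: IH => s Hs; apply: Hquiet; lia.
Qed.

Lemma event_idle p s : ev_of p (H s) ->
  is_idle (loc s p) = is_inv (H s) /\ is_idle (loc s.+1 p) = ~~ is_inv (H s).
Proof.
case Eh: (H s) => [[p' o|p' r]|] //= /eqP Ep; subst p'.
  by have [-> -> _] := step_invoke (hist_invoke Eh).
have [El [_ [[ts [v [w [_ Hl]]]]|[j [ts [rr [_ Hl]]]]]]] := hist_response Eh; rewrite Hl.
  by rewrite (step_ack El Hl).1.
by rewrite (step_return El Hl).1.
Qed.

Lemma first_event_invoke p s :
  ev_of p (H s) -> (forall s', s' < s -> ~~ ev_of p (H s')) -> is_inv (H s).
Proof.
move=> Hev Hbefore; have [<- _] := event_idle Hev.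
rewrite (@idle_steps p 0 s) //; first by case: exec => -> _.
Qed.

Lemma events_alternate p s s' : ev_of p (H s) -> s < s' -> ev_of p (H s') ->
  (forall k, s < k < s' -> ~~ ev_of p (H k)) -> is_inv (H s) != is_inv (H s').
Proof.
move=> Hev Hlt Hev' Hquiet; have [_ E1] := event_idle Hev; have [E2 _] := event_idle Hev'.
by rewrite -E2 (@idle_steps p s.+1 s') // ?E1; case: (is_inv (H s)).
Qed.

Definition byz_bcast_at t (z : proc * nat * V) :=
  [/\ z.1.1 \notin C, first_certified z.1.1 z.1.2 t & certified_val z.1.1 z.1.2 z.2 t].

Lemma byz_bcast_at_unique t z1 z2 : byz_bcast_at t z1 -> byz_bcast_at t z2 -> z1 = z2.
Proof.
case: z1 z2 => [[j1 ts1] v1] [[j2 ts2] v2]; rewrite /byz_bcast_at /= => -[_ F1 V1] [_ F2 V2].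
have [Ej Ets] := first_certified_same F1 F2; subst j2 ts2.
by rewrite (certified_val_agree V1 V2).
Qed.

Definition byz_bcast t := opick (byz_bcast_at t).

Lemma byz_bcastP t z : byz_bcast t = Some z <-> byz_bcast_at t z.
Proof. by apply: opickP; exact: byz_bcast_at_unique. Qed.

Lemma byz_bcast_notC t z : byz_bcast t = Some z -> z.1.1 \notin C.
Proof. by case/byz_bcastP. Qed.

Definition only_correct (e : option (event n V)) :=
  if e is Some e' then (if ev_proc e' \in C then e else None) else None.

(* The history H': slot 3t holds the invocation and slot 3t+1 the response of a
   fictitious broadcast by the Byzantine sender whose first certificate appears at
   time t; slot 3t+2 holds the event of H at time t if it belongs to a correct process. *)
Definition lin_hist (k : nat) : option (event n V) :=
  match k %% 3 with
  | 0 => omap (fun z => EInv z.1.1 (OBcast z.1.2 z.2)) (byz_bcast (k %/ 3))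
  | 1 => omap (fun z => ERes z.1.1 RAck) (byz_bcast (k %/ 3))
  | _ => only_correct (H (k %/ 3))
  end.

Lemma lin_hist_slot t r : r < 3 ->
  lin_hist (t * 3 + r) = match r with
    | 0 => omap (fun z => EInv z.1.1 (OBcast z.1.2 z.2)) (byz_bcast t)
    | 1 => omap (fun z => ERes z.1.1 RAck) (byz_bcast t)
    | _ => only_correct (H t)
    end.
Proof. by move=> Hr; rewrite /lin_hist divnMDl // modnMDl divn_small // modn_small // addn0. Qed.

Lemma lin_hist0 t : lin_hist (t * 3) = omap (fun z => EInv z.1.1 (OBcast z.1.2 z.2)) (byz_bcast t).
Proof. by rewrite -[t * 3]addn0 lin_hist_slot. Qed.

Lemma lin_hist1 t : lin_hist (t * 3 + 1) = omap (fun z => ERes z.1.1 RAck) (byz_bcast t).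
Proof. exact: lin_hist_slot. Qed.

Lemma lin_hist2 t : lin_hist (t * 3 + 2) = only_correct (H t).
Proof. exact: lin_hist_slot. Qed.

Lemma slot3 k : exists t r, r < 3 /\ k = t * 3 + r.
Proof. by exists (k %/ 3), (k %% 3); split; [exact: ltn_pmod | exact: divn_eq]. Qed.

Lemma ev_lin_hist0 p t :
  ev_of p (lin_hist (t * 3)) = if byz_bcast t is Some z then z.1.1 == p else false.
Proof. by rewrite lin_hist0; case: (byz_bcast t). Qed.

Lemma ev_lin_hist1 p t :
  ev_of p (lin_hist (t * 3 + 1)) = if byz_bcast t is Some z then z.1.1 == p else false.
Proof. by rewrite lin_hist1; case: (byz_bcast t). Qed.

Lemma ev_lin_hist2 p t : ev_of p (lin_hist (t * 3 + 2)) = (p \in C) && ev_of p (H t).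
Proof.
rewrite lin_hist2 /only_correct; case: (H t) => [e|] /=; last by rewrite andbF.
by case: ifP => He /=; case: eqP => [<-|_]; rewrite ?He ?andbF.
Qed.

Lemma lin_hist_correct p t : p \in C -> ev_of p (H t) -> lin_hist (t * 3 + 2) = H t.
Proof.
by move=> Hp; rewrite lin_hist2 /only_correct; case: (H t) => // e /= /eqP ->; rewrite Hp.
Qed.

Lemma correct_event_slot p k : p \in C -> ev_of p (lin_hist k) ->
  exists2 t, k = t * 3 + 2 & ev_of p (H t).
Proof.
move=> Hp; have [t [r [Hr ->]]] := slot3 k; case: r Hr => [|[|[|//]]] _.
- rewrite addn0 ev_lin_hist0; case E: (byz_bcast t) => [z|] // /eqP Ez.
  by have := byz_bcast_notC E; rewrite Ez Hp.
- rewrite ev_lin_hist1; case E: (byz_bcast t) => [z|] // /eqP Ez.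
  by have := byz_bcast_notC E; rewrite Ez Hp.
- by rewrite ev_lin_hist2 Hp => He; exists t.
Qed.

Lemma byz_event_slot p k : p \notin C -> ev_of p (lin_hist k) ->
  exists t z, [/\ byz_bcast t = Some z, z.1.1 = p & k = t * 3 \/ k = t * 3 + 1].
Proof.
move=> Hp; have [t [r [Hr ->]]] := slot3 k; case: r Hr => [|[|[|//]]] _.
- rewrite addn0 ev_lin_hist0; case E: (byz_bcast t) => [z|] // /eqP Ez.
  by exists t, z; split => //; left.
- rewrite ev_lin_hist1; case E: (byz_bcast t) => [z|] // /eqP Ez.
  by exists t, z; split => //; right.
- by rewrite ev_lin_hist2 (negbTE Hp).
Qed.

Lemma wf_lin_hist_correct p : p \in C ->
  (forall j, ev_of p (lin_hist j) -> (forall k, k < j -> ~~ ev_of p (lin_hist k)) ->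
     is_inv (lin_hist j)) /\
  (forall i j, ev_of p (lin_hist i) -> next_of lin_hist p i j ->
     is_inv (lin_hist i) != is_inv (lin_hist j)).
Proof.
move=> Hp; split.
  move=> j Hev Hbefore; have [t Ej Het] := correct_event_slot Hp Hev; subst j.
  rewrite (lin_hist_correct Hp Het).
  apply: (first_event_invoke Het) => s' Hs'.
  by have := Hbefore (s' * 3 + 2) (ltac:(lia)); rewrite ev_lin_hist2 Hp.
move=> i j Hev [Hij [Hev' Hquiet]].
have [s Ei Hes] := correct_event_slot Hp Hev; have [s' Ej Hes'] := correct_event_slot Hp Hev'.
subst i j; rewrite (lin_hist_correct Hp Hes) (lin_hist_correct Hp Hes').
apply: (events_alternate Hes _ Hes') => [|k Hk]; first by lia.
by have := Hquiet (k * 3 + 2) (ltac:(lia)); rewrite ev_lin_hist2 Hp.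
Qed.

Lemma wf_lin_hist_byz p : p \notin C ->
  (forall j, ev_of p (lin_hist j) -> (forall k, k < j -> ~~ ev_of p (lin_hist k)) ->
     is_inv (lin_hist j)) /\
  (forall i j, ev_of p (lin_hist i) -> next_of lin_hist p i j ->
     is_inv (lin_hist i) != is_inv (lin_hist j)).
Proof.
move=> Hp; split.
  move=> j Hev Hbefore; have [t [z [Bt Ez [->|Ej]]]] := byz_event_slot Hp Hev.
    by rewrite lin_hist0 Bt.
  subst j.
  by have := Hbefore (t * 3) (ltac:(lia)); rewrite ev_lin_hist0 Bt Ez eqxx.
move=> i j Hev [Hij [Hev' Hquiet]].
have [t [z [Bt Ez Ei]]] := byz_event_slot Hp Hev.
have [t' [z' [Bt' Ez' Ej]]] := byz_event_slot Hp Hev'.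
case: Ei Ej => Ei [] Ej; subst i j.
- by have := Hquiet (t * 3 + 1) (ltac:(lia)); rewrite ev_lin_hist1 Bt Ez eqxx.
- have Et : t' = t.
    case: (ltngtP t' t) => // Hlt; first by lia.
    by have := Hquiet (t * 3 + 1) (ltac:(lia)); rewrite ev_lin_hist1 Bt Ez eqxx.
  by subst t'; rewrite lin_hist0 lin_hist1 Bt.
- by rewrite lin_hist0 lin_hist1 Bt Bt'.
- by have := Hquiet (t' * 3) (ltac:(lia)); rewrite ev_lin_hist0 Bt' Ez' eqxx.
Qed.

Lemma wf_lin_hist : wf_hist lin_hist.
Proof.
by move=> p; case: (boolP (p \in C)); [exact: wf_lin_hist_correct | exact: wf_lin_hist_byz].
Qed.

Local Notation in_C := (fun e : event n V => ev_proc e \in C).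

Definition correct_at (HH : history n V) t : bool :=
  if HH t is Some e then ev_proc e \in C else false.

Lemma cnt_correctS (HH : history n V) i : cnt in_C HH i.+1 = cnt in_C HH i + correct_at HH i.
Proof. by rewrite /cnt -addn1 iotaD count_cat /= addn0 /correct_at; case: (HH i). Qed.

Lemma correct_at_byz_slot t r : r < 2 -> correct_at lin_hist (t * 3 + r) = false.
Proof.
case: r => [|[|//]] _; rewrite /correct_at ?addn0 ?lin_hist0 ?lin_hist1;
  by case E: (byz_bcast t) => [z|] //=; apply/negbTE; exact: byz_bcast_notC E.
Qed.

Lemma cnt_lin_hist t : cnt in_C lin_hist (t * 3 + 2) = cnt in_C H t.
Proof.
elim: t => [|t IH].
  have := correct_at_byz_slot 0 (isT : 0 < 2); have := correct_at_byz_slot 0 (isT : 1 < 2).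
  by rewrite mul0n !add0n cnt_correctS cnt_correctS => -> ->.
have -> : t.+1 * 3 + 2 = (t * 3 + 2).+3 by lia.
rewrite cnt_correctS cnt_correctS cnt_correctS IH.
have -> : (t * 3 + 2).+2 = t.+1 * 3 + 1 by lia.
have -> : (t * 3 + 2).+1 = t.+1 * 3 + 0 by lia.
rewrite (correct_at_byz_slot t.+1 (isT : 0 < 2)) (correct_at_byz_slot t.+1 (isT : 1 < 2)).
rewrite !addn0 cnt_correctS; congr (_ + _).
by rewrite /correct_at lin_hist2 /only_correct; case: (H t) => [e|] //=; case: ifP => // ->.
Qed.

Lemma lin_hist_restr : restr_eq in_C H lin_hist.
Proof.
move=> k e; split => -[i [Hi [Pe Hcnt]]].
  exists (i * 3 + 2); split; first by rewrite lin_hist2 /only_correct Hi Pe.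
  by split => //; rewrite cnt_lin_hist.
have [t [r [Hr Ei]]] := slot3 i; subst i.
have Hr2 : ~ r < 2 by move/(correct_at_byz_slot t); rewrite /correct_at Hi Pe.
have Er : r = 2 by lia.
subst r; move: Hi; rewrite lin_hist2 /only_correct.
case E: (H t) => [e'|] //; case: ifP => // _ [Ee].
by subst e'; exists t; split => //; split => //; rewrite -cnt_lin_hist.
Qed.

Lemma lin_hist_invoke p o ti :
  p \in C -> l ti = LInvoke p o -> lin_hist (ti * 3 + 2) = Some (EInv p o).
Proof.
move=> Hp Hinv; have [_ _ Hh] := step_invoke Hinv.
by rewrite (lin_hist_correct Hp (_ : ev_of p (H ti))) // Hh /= eqxx.
Qed.

Lemma lin_hist_resp_correct ti j r : resp_at lin_hist (ti * 3 + 2) j r ->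
  exists p o tr, [/\ p \in C, H ti = Some (EInv p o), j = tr * 3 + 2 & responds p ti tr r].
Proof.
move=> [p [o [Hi [[Hij [Hev Hquiet]] Hj]]]].
move: Hi; rewrite lin_hist2 /only_correct; case E: (H ti) => [e|] //.
case: ifP => Hin // [Ee]; subst e; rewrite /= in Hin.
have [tr Ej Het] := correct_event_slot Hin Hev; subst j.
rewrite (lin_hist_correct Hin Het) in Hj.
exists p, o, tr; split => //; split => //; first by lia.
by move=> s /andP [H1 H2]; have := Hquiet (s * 3 + 2) (ltac:(lia)); rewrite ev_lin_hist2 Hin.
Qed.

Lemma lin_hist_resp_byz t j r : resp_at lin_hist (t * 3) j r ->
  [/\ j = t * 3 + 1, r = RAck & exists z, byz_bcast t = Some z].
Proof.
move=> [p [o [Hi [[Hij [Hev Hquiet]] Hj]]]].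
move: Hi; rewrite lin_hist0; case E: (byz_bcast t) => [z|] //= [Ep _].
have Ej : j = t * 3 + 1.
  case: (ltngtP j (t * 3 + 1)) => // Hlt; first by lia.
  by have := Hquiet (t * 3 + 1) (ltac:(lia)); rewrite ev_lin_hist1 E Ep eqxx.
by subst j; move: Hj; rewrite lin_hist1 E => -[_ <-]; split => //; exists z.
Qed.

Definition deliver_point (p : proc) ti (r : resp V) t :=
  exists tr j ts, [/\ l ti = LInvoke p (ODeliver j ts), responds p ti tr r, ti < t <= tr &
    (r = RVal None /\ ~ certified j ts t) \/
    (exists v, r = RVal (Some v) /\ certified_val j ts v t)].

Lemma deliver_point_unique p ti ti' r r' t :
  deliver_point p ti r t -> deliver_point p ti' r' t -> ti = ti' /\ r = r'.
Proof.
have nested a a' b ra ja tsa ja' tsa' : l a = LInvoke p (ODeliver ja tsa) ->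
    l a' = LInvoke p (ODeliver ja' tsa') -> responds p a b ra ->
    a < a' -> a' < t -> t <= b -> False.
  move=> Ea Ea' [_ _ Hquiet] Hlt H1 H2; have [_ _ Hh] := step_invoke Ea'.
  by have := Hquiet a' (ltac:(lia)); rewrite Hh /= eqxx.
move=> [tr [j [ts [El R /andP [Ht1 Ht2] _]]]] [tr' [j' [ts' [El' R' /andP [Ht1' Ht2'] _]]]].
have Eti : ti = ti'.
  case: (ltngtP ti ti') => // Hlt; exfalso.
    exact: nested El El' R Hlt Ht1' Ht2.
  exact: nested El' El R' Hlt Ht1 Ht2'.
by subst ti'; split => //; have [_ ->] := responds_unique R R'.
Qed.

(* The sequential history: position t * (n+1) holds the broadcast whose first certificate
   appears at time t (a fictitious one of H' if its sender is Byzantine), position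
   t * (n+1) + p + 1 the deliver of the correct process p linearized at time t. *)
Definition lin_entry (k : nat) (e : nat * resp V) :=
  [\/ exists t z, [/\ k = t * n.+1, byz_bcast t = Some z & e = (t * 3, RAck)],
      exists t j ts v ti, [/\ k = t * n.+1, j \in C, first_certified j ts t,
                             l ti = LInvoke j (OBcast ts v) & e = (ti * 3 + 2, RAck)]
    | exists t (p : proc) ti r, [/\ k = t * n.+1 + p.+1, p \in C,
                             least (deliver_point p ti r) t & e = (ti * 3 + 2, r)]].

Lemma slot_inj t1 t2 s1 s2 : s1 < n.+1 -> s2 < n.+1 ->
  t1 * n.+1 + s1 = t2 * n.+1 + s2 -> t1 = t2 /\ s1 = s2.
Proof.
move=> Hs1 Hs2 E.
have D t s : s < n.+1 -> (t * n.+1 + s) %/ n.+1 = t /\ (t * n.+1 + s) %% n.+1 = s.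
  by move=> Hs; rewrite divnMDl // modnMDl divn_small // modn_small // addn0.
have [A1 B1] := D t1 s1 Hs1; have [A2 B2] := D t2 s2 Hs2.
by split; [rewrite -A1 -A2 E | rewrite -B1 -B2 E].
Qed.

Lemma slot0_inj t1 t2 : t1 * n.+1 = t2 * n.+1 -> t1 = t2.
Proof. by move=> E; have [] := @slot_inj t1 t2 0 0 (ltn0Sn n) (ltn0Sn n); rewrite ?addn0. Qed.

Lemma slot0_neq t1 t2 (p : proc) : t1 * n.+1 <> t2 * n.+1 + p.+1.
Proof.
move=> E; have [] := @slot_inj t1 t2 0 p.+1 (ltn0Sn n) (ltn_ord p); rewrite ?addn0 //.
Qed.

Lemma lin_entry_fun k e1 e2 : lin_entry k e1 -> lin_entry k e2 -> e1 = e2.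
Proof.
have byz_not_correct t z j ts : byz_bcast t = Some z -> first_certified j ts t -> j \notin C.
  move=> /byz_bcastP [HzC Fz _] Fj; have [<- _] := first_certified_same Fz Fj; exact: HzC.
case=> [[t1 [z1 [-> B1 ->]]]|[t1 [j1 [ts1 [v1 [ti1 [-> Hj1 I1 L1 ->]]]]]]
       |[t1 [p1 [ti1 [r1 [-> Hp1 P1 ->]]]]]];
case=> [[t2 [z2 [E B2 ->]]]|[t2 [j2 [ts2 [v2 [ti2 [E Hj2 I2 L2 ->]]]]]]
       |[t2 [p2 [ti2 [r2 [E Hp2 P2 ->]]]]]];
  try by [case: (slot0_neq E) | case: (slot0_neq (esym E))].
- by rewrite (slot0_inj E).
- have Et := slot0_inj E; subst t2.
  by move: Hj2; rewrite (negbTE (byz_not_correct _ _ _ _ B1 I2)).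
- have Et := slot0_inj E; subst t2.
  by move: Hj1; rewrite (negbTE (byz_not_correct _ _ _ _ B2 I1)).
- have Et := slot0_inj E; subst t2.
  have [Ej Ets] := first_certified_same I1 I2; subst j2 ts2.
  by rewrite (unique_ts (proj1 (C_correct j1) Hj1) L1 L2).
- have [Et Ep] := slot_inj (ltn_ord p1 : p1.+1 < n.+1) (ltn_ord p2 : p2.+1 < n.+1) E; subst t2.
  have Ep' : p1 = p2 by apply: val_inj; case: Ep.
  by subst p2; have [-> ->] := deliver_point_unique P1.1 P2.1.
Qed.

Definition lin_seq (k : nat) : option (nat * resp V) := opick (lin_entry k).

Lemma lin_seqP k e : lin_seq k = Some e <-> lin_entry k e.
Proof. by apply: opickP; exact: lin_entry_fun. Qed.

Lemma lin_entry_info k i r : lin_entry k (i, r) -> exists tau s, [/\ k = tau * n.+1 + s, s < n.+1 &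
  (i = tau * 3 /\ r = RAck /\ exists z, byz_bcast tau = Some z) \/
  (exists ti p o, [/\ i = ti * 3 + 2, p \in C, H ti = Some (EInv p o), ti < tau &
      forall tr r0, responds p ti tr r0 -> tau <= tr /\ r0 = r])].
Proof.
case=> [[t [z [-> Bt [-> ->]]]]|[t [j [ts [v [ti [-> Hj F Hinv [-> ->]]]]]]]
       |[t [p [ti [r' [-> Hp P [-> ->]]]]]]].
- by exists t, 0; rewrite addn0; split => //; left; split => //; split => //; exists z.
- exists t, 0; rewrite addn0; split => //; right.
  have Hjc := proj1 (C_correct j) Hj; have [_ _ Hh] := step_invoke Hinv.
  exists ti, j, (OBcast ts v); split => //.
    have [v' [q [x [_ Hx Hc]]]] := F.1; have [t0 Ht0 Hinv0] := cert_correct_sender Hc Hx Hjc.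
    by rewrite -(unique_ts Hjc Hinv0 Hinv).
  move=> tr r0 R; have [[w|] [Hret [Er Hne]]] := response_justified Hjc Hinv R; last by case: Hne.
  have [w' [x [/andP [_ Hw'] Hc Hx]]] := Hret.
  have Hcert : certified j ts w'.+1 by exists w, j, x.
  by have := least_le F Hcert; split => //; lia.
- exists t, p.+1; split => //; first exact: ltn_ord.
  right; have [tr' [j [ts [Hinv R /andP [Ht1 Ht2] _]]]] := P.1.
  have [_ _ Hh] := step_invoke Hinv.
  exists ti, p, (ODeliver j ts); split => // tr r0 R0.
  by have [-> ->] := responds_unique R0 R.
Qed.

Lemma deliver_point_exists p ti tr j ts r : p \in C -> l ti = LInvoke p (ODeliver j ts) ->
  responds p ti tr r -> exists s, deliver_point p ti r s.
Proof.
move=> Hp Hinv R; have [rr [Hret Er]] := response_justified (proj1 (C_correct p) Hp) Hinv R.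
subst r; case: rr Hret R => [w|] Hret R.
  have [w' [x [/andP [Hw1 Hw2] Hc Hx]]] := Hret.
  exists w'.+1, tr, j, ts; split => //; first by apply/andP; split; lia.
  by right; exists w; split => //; exists p, x.
have [s /andP [Hs1 Hs2] Hnone] := Hret.
exists s, tr, j, ts; split => //; first by apply/andP; split; lia.
left; split => // -[v' [q [x [Hq Hx Hc]]]]; have [tq /andP [Htq1 _] Hq'] := Hnone q.
by rewrite (Hq' x (mem_grow (proj1 (C_correct q) Hq) _ Htq1 Hx)) in Hc.
Qed.

Lemma lin_entry_complete i : complete lin_hist i -> exists k r, lin_entry k (i, r).
Proof.
move=> [j [r0 Hr]]; have [t [s [Hs Ei]]] := slot3 i; subst i.
case: s Hs Hr => [|[|[|//]]] _ Hr.
- rewrite addn0 in Hr *; have [_ _ [z Bt]] := lin_hist_resp_byz Hr.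
  by exists (t * n.+1), RAck; constructor 1; exists t, z.
- by move: Hr => [p [o [Hi _]]]; move: Hi; rewrite lin_hist1; case: (byz_bcast t).
have [p [o [tr [Hp Hh Ej R]]]] := lin_hist_resp_correct Hr; have Hinv := hist_invoke Hh.
case: o Hinv Hh => [ts v|j' ts] Hinv Hh; last first.
  have [s Hs] := deliver_point_exists Hp Hinv R; have [s0 Ls] := least_exists Hs.
  by exists (s0 * n.+1 + p.+1), r0; constructor 3; exists s0, p, t, r0.
have [[w|] [Hret [_ Hne]]] := response_justified (proj1 (C_correct p) Hp) Hinv R; last by case: Hne.
have [w' [x [_ Hc Hx]]] := Hret.
have [B FB] : exists B, first_certified p ts B by apply: (@least_exists _ w'.+1); exists w, p, x.
by exists (B * n.+1), RAck; constructor 2; exists B, p, ts, v, t.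
Qed.

Lemma lin_entry_resp k i r : lin_entry k (i, r) ->
  is_inv (lin_hist i) /\ forall j r0, resp_at lin_hist i j r0 -> r = r0.
Proof.
move=> /lin_entry_info [tau [s [_ _ [[-> [-> [z Bt]]]|[ti [p [o [-> Hp Hh _ Hresp]]]]]]]].
  by rewrite lin_hist0 Bt; split => // j r0 /lin_hist_resp_byz [].
have Hev : ev_of p (H ti) by rewrite Hh /= eqxx.
split; first by rewrite (lin_hist_correct Hp Hev) Hh.
move=> j r0 /lin_hist_resp_correct [p' [o' [tr [_ Hh' _ R]]]].
by move: Hh'; rewrite Hh => -[Ep _]; subst p'; have [_ ->] := Hresp tr r0 R.
Qed.

Lemma lin_entry_once k1 k2 i r1 r2 : lin_entry k1 (i, r1) -> lin_entry k2 (i, r2) -> k1 = k2.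
Proof.
case=> [[t1 [z1 [-> B1 [Ei1 _]]]]|[t1 [j1 [ts1 [v1 [ti1 [-> Hj1 F1 L1 [Ei1 _]]]]]]]
       |[t1 [p1 [ti1 [r1' [-> Hp1 P1 [Ei1 _]]]]]]];
case=> [[t2 [z2 [-> B2 [Ei2 _]]]]|[t2 [j2 [ts2 [v2 [ti2 [-> Hj2 F2 L2 [Ei2 _]]]]]]]
       |[t2 [p2 [ti2 [r2' [-> Hp2 P2 [Ei2 _]]]]]]];
  subst i; try by [lia | have -> : t1 = t2 by lia].
all: have Eti : ti1 = ti2 by lia.
all: subst ti2.
- move: L2; rewrite L1 => -[Ej Ets _]; subst j2 ts2.
  by rewrite (least_unique F1 F2).
- by have [tr [j [ts [L _ _ _]]]] := P2.1; rewrite L1 in L.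
- by have [tr [j [ts [L _ _ _]]]] := P1.1; rewrite L2 in L.
- have [tr1 [j1 [ts1 [L1 R1 _ _]]]] := P1.1; have [tr2 [j2 [ts2 [L2 R2 _ _]]]] := P2.1.
  move: L2; rewrite L1 => -[Ep _ _]; subst p2.
  have [_ Er] := responds_unique R1 R2; subst r2'.
  by rewrite (least_unique P1 P2).
Qed.

Lemma lin_entry_realtime a ja ra kb ib rb : resp_at lin_hist a ja ra -> ja < ib ->
  lin_entry kb (ib, rb) -> exists ka r, ka < kb /\ lin_entry ka (a, r).
Proof.
move=> Hr Hlt Hb; have [ka [r Ha]] := lin_entry_complete (ex_intro _ ja (ex_intro _ ra Hr)).
exists ka, r; split => //.
have [ta [sa [-> Hsa Ia]]] := lin_entry_info Ha; have [tb [sb [-> Hsb Ib]]] := lin_entry_info Hb.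
have Hresp : ta * 3 < ja.
  case: Ia => [[Ea _]|[ti [p [o [Ea Hp Hh Hti Hresp]]]]]; subst a.
    by have [-> _ _] := lin_hist_resp_byz Hr; lia.
  have [p' [o' [tr [_ Hh' Ej R]]]] := lin_hist_resp_correct Hr.
  move: Hh'; rewrite Hh => -[Ep _]; subst p'.
  by have [Htr _] := Hresp tr ra R; lia.
have Hinv : ib <= tb * 3.
  by case: Ib => [[-> _]|[ti [p [o [-> _ _ Hti _]]]]]; lia.
have Htab : ta < tb by lia.
by nia.
Qed.

Lemma lin_bcast_info j ts k v : is_bcast_at lin_hist lin_seq j ts k v ->
  exists B, [/\ k = B * n.+1, first_certified j ts B & certified_val j ts v B].
Proof.
move=> [i [r [/lin_seqP Hk Hi]]].
case: Hk => [[t [z [-> Bt [Ei _]]]]|[t [j2 [ts2 [v2 [ti [-> Hj2 F2 L2 [Ei _]]]]]]]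
           |[t [p [ti [r' [-> Hp P [Ei _]]]]]]]; subst i.
- move: Hi; rewrite lin_hist0 Bt => -[Ej Ets Ev].
  by have [_ F V'] := (byz_bcastP t z).1 Bt; exists t; rewrite -Ej -Ets -Ev.
- move: Hi; rewrite (lin_hist_invoke Hj2 L2) => -[Ej Ets Ev]; subst j2 ts2 v2.
  exists t; split => //; have [v' [q [x [Hq Hx Hc]]]] := F2.1.
  have Hjc := proj1 (C_correct j) Hj2; have [t0 _ L0] := cert_correct_sender Hc Hx Hjc.
  have Et := unique_ts Hjc L0 L2; subst t0; move: L0; rewrite L2 => -[Ev]; subst v'.
  by exists q, x.
- by have [tr [j' [ts' [L _ _ _]]]] := P.1; move: Hi; rewrite (lin_hist_invoke Hp L).
Qed.

Lemma lin_bcast_exists j ts tau : certified j ts tau ->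
  exists B v, B <= tau /\ is_bcast_at lin_hist lin_seq j ts (B * n.+1) v.
Proof.
move=> Hc; have [B FB] := least_exists Hc; have [v HV] := FB.1.
exists B, v; split; first exact: least_le FB Hc.
case: (boolP (j \in C)) => Hj.
  have [q [x [Hq Hx Hcx]]] := HV.
  have [ti _ Hinv] := cert_correct_sender Hcx Hx (proj1 (C_correct j) Hj).
  exists (ti * 3 + 2), RAck; rewrite (lin_hist_invoke Hj Hinv); split => //.
  by apply/lin_seqP; constructor 2; exists B, j, ts, v, ti.
have Bt : byz_bcast B = Some (j, ts, v) by apply/byz_bcastP.
exists (B * 3), RAck; rewrite lin_hist0 Bt; split => //.
by apply/lin_seqP; constructor 1; exists B, (j, ts, v).
Qed.

Lemma lin_deliver_spec k ti p j ts r :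
  lin_seq k = Some (ti * 3 + 2, r) -> l ti = LInvoke p (ODeliver j ts) ->
  seq_spec lin_hist lin_seq k (ODeliver j ts) r.
Proof.
move=> /lin_seqP Hk Hinv.
case: Hk => [[t [z [_ _ [Ei _]]]]|[t [j2 [ts2 [v2 [ti2 [_ _ _ L2 [Ei _]]]]]]]
           |[t [p' [ti' [r' [-> _ P [Ei ->]]]]]]]; first by lia.
  have Eti : ti2 = ti by lia.
  by subst ti2; rewrite L2 in Hinv.
have Eti : ti' = ti by lia.
subst ti'.
have [tr [j' [ts' [L _ _ Hcase]]]] := P.1.
move: L; rewrite Hinv => -[_ Ej Ets]; subst j' ts'.
have Hp' := ltn_ord p'.
case: Hcase => [[-> Hnone]|[v [-> Hcv]]]; split => //.
- move=> k' v' Hk' Hb _; have [B [Ek' FB _]] := lin_bcast_info Hb; subst k'.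
  by case: Hnone; apply: certified_mono FB.1; nia.
- move=> k' v' Hk' Hb _; have [B [_ _ HV]] := lin_bcast_info Hb.
  by rewrite (certified_val_agree HV Hcv).
- move=> Hno; have [B [v' [HB Hb]]] := lin_bcast_exists (ex_intro _ v Hcv).
  by case: (Hno _ _ _ Hb); nia.
Qed.

Lemma lin_entry_spec k i r p o : lin_seq k = Some (i, r) -> lin_hist i = Some (EInv p o) ->
  seq_spec lin_hist lin_seq k o r.
Proof.
move=> Hk Hi; case/lin_seqP: (Hk) => [[t [z [_ Bt [Ei Er]]]]|[t [j [ts [v [ti [_ Hj _ L [Ei Er]]]]]]]
       |[t [p' [ti [r' [_ Hp P [Ei _]]]]]]]; subst i.
- by move: Hi; rewrite lin_hist0 Bt => -[_ <-].
- by move: Hi; rewrite (lin_hist_invoke Hj L) => -[_ <-].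
- have [tr [j [ts [L _ _ _]]]] := P.1; move: Hi; rewrite (lin_hist_invoke Hp L) => -[_ <-].
  exact: lin_deliver_spec Hk L.
Qed.

Lemma lin_hist_linearizable : linearizable lin_hist.
Proof.
split; first exact: wf_lin_hist.
exists lin_seq; split; first by move=> k i r /lin_seqP; exact: lin_entry_resp.
split; first by move=> k1 k2 i r1 r2 /lin_seqP H1 /lin_seqP H2; exact: lin_entry_once H1 H2.
split.
  by move=> i /lin_entry_complete [k [r Hk]]; exists k, r; apply/lin_seqP.
split; last exact: lin_entry_spec.
move=> a ja ra kb ib rb Hr Hlt /lin_seqP Hb.
by have [ka [r [Hk Ha]]] := lin_entry_realtime Hr Hlt Hb; exists ka, r; split => //; apply/lin_seqP.
Qed.

End Execution.

Theorem theorem6p8 (n f : nat) (V : eqType) :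
  2 * f < n ->
  forall (c : nat -> config n V) (l : nat -> label n V),
    is_execution f c l ->
    unforgeable c l ->
    fair c l ->
    A1 c l ->
    A2 c l ->
    byz_linearizable (correct c) (hist f c l) /\ resilient f c l.
Proof.
move=> few_faulty c l exec unforg fair_sched invokes_forever unique_ts; split.
  move=> C C_correct; exists (@lin_hist n f V c l C); split.
    exact: lin_hist_linearizable.
  exact: lin_hist_restr.
exact: resilience.
Qed.
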